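(* Let $0<q<1$, $m,n\in\mathbb N_0$, $z_1,z_2\in\mathbb C$. (i) If $|bq|<1$ and $u,v\in\mathbb C$ are sufficiently small (e.g. $|uz_1|,|vz_2|,|uv|<1$), then $$\sum_{m,n=0}^\infty\frac{p_{m,n}(z_1,z_2;b|q)}{(q;q)_m(q;q)_n}u^mv^n=(bq;q)_\infty\sum_{j=0}^\infty\frac{(bq)^j}{(q;q)_j}\frac{(uvq^j;q)_\infty}{(uz_1q^j,vz_2q^j;q)_\infty}=\frac{(bq,uv;q)_\infty}{(uz_1,vz_2;q)_\infty}\sum_{j=0}^\infty\frac{(uz_1,vz_2;q)_j}{(q,uv;q)_j}(bq)^j.$$ (ii) If $|bq|<1$, $|cq|<1$ and $b\ne0$, then $$\frac{p_{m,n}(z_1,z_2;b|q)}{(bq;q)_\infty}=\sum_{j=0}^\infty\frac{(c/b;q)_j}{(q;q)_j}\big(bq^{\frac{m+n}2+1}\big)^j\frac{p_{m,n}(z_1q^{j/2},z_2q^{j/2};c|q)}{(cq;q)_\infty}.$$ (iii) If $|bq|<1$, then $$\frac{p_{m,n}(z_1,z_2;b|q)}{(bq;q)_\infty}=\sum_{j=0}^\infty\frac{\big(bq^{(m+n)/2+1}\big)^j}{(q;q)_j}H_{m,n}(z_1q^{j/2},z_2q^{j/2}|q),$$ and conversely $$H_{m,n}(z_1,z_2|q)=\frac{1}{(bq;q)_\infty}\sum_{k=0}^\infty\frac{\big(-bq^{(m+n)/2+1}\big)^k}{(q;q)_k}q^{\binom k2}p_{m,n}(z_1q^{k/2},z_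2q^{k/2};b|q).$$
   Context: $(a;q)_n=\prod_{j=0}^{n-1}(1-aq^j)$, $(a;q)_\infty=\prod_{j\ge0}(1-aq^j)$, $(a_1,\dots,a_r;q)_n=\prod_i(a_i;q)_n$, $\left[{m\atop k}\right]_q=\frac{(q;q)_m}{(q;q)_k(q;q)_{m-k}}$, $m\wedge n=\min\{m,n\}$. The first $q$-$2D$-Hermite polynomials are $$H_{m,n}(z_1,z_2|q)=\sum_{k=0}^{m\wedge n}\left[{m\atop k}\right]_q\left[{n\atop k}\right]_q(-1)^kq^{\binom k2}(q;q)_k\,z_1^{m-k}z_2^{n-k},$$ and the $q$-$2D$ ultraspherical polynomials are $$p_{m,n}(z_1,z_2;b|q)=\sum_{k=0}^{m\wedge n}\left[{m\atop k}\right]_q\left[{n\atop k}\right]_q(-1)^kq^{\binom k2}(q;q)_k\,(bq;q)_{m+n-k}\,z_1^{m-k}z_2^{n-k}.$$ *)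

From Stdlib Require Import Reals ClassicalEpsilon.
Open Scope R_scope.

Definition Cplx : Type := (R * R)%type.
Definition RtoC (r : R) : Cplx := (r, 0).
Definition Czero : Cplx := (0, 0).
Definition Cone : Cplx := (1, 0).
Definition Cadd (z w : Cplx) : Cplx := (fst z + fst w, snd z + snd w).
Definition Copp (z : Cplx) : Cplx := (- fst z, - snd z).
Definition Csub (z w : Cplx) : Cplx := Cadd z (Copp w).
Definition Cmul (z w : Cplx) : Cplx :=
  (fst z * fst w - snd z * snd w, fst z * snd w + snd z * fst w).
Definition Cinv (z : Cplx) : Cplx :=
  (fst z / (fst z ^ 2 + snd z ^ 2), - snd z / (fst z ^ 2 + snd z ^ 2)).
Definition Cdiv (z w : Cplx) : Cplx := Cmul z (Cinv w).
Definition Cnorm (z : Cplx) : R := sqrt (fst z ^ 2 + snd z ^ 2).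
Fixpoint Cpow (z : Cplx) (n : nat) : Cplx :=
  match n with O => Cone | S n => Cmul (Cpow z n) z end.

Declare Scope C_scope.
Delimit Scope C_scope with C.
Infix "+" := Cadd : C_scope.
Infix "-" := Csub : C_scope.
Infix "*" := Cmul : C_scope.
Infix "/" := Cdiv : C_scope.
Notation "- z" := (Copp z) : C_scope.
Infix "^" := Cpow : C_scope.

(* finite sums / products over j = 0 .. n-1 *)
Fixpoint Csum_to (n : nat) (f : nat -> Cplx) : Cplx :=
  match n with O => Czero | S n => Cadd (Csum_to n f) (f n) end.
Fixpoint Cprod_to (n : nat) (f : nat -> Cplx) : Cplx :=
  match n with O => Cone | S n => Cmul (Cprod_to n f) (f n) end.

Definition Ccv (u : nat -> Cplx) (l : Cplx) : Prop :=
  forall eps : R, 0 < eps -> exists N : nat, forall k : nat,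
    (N <= k)%nat -> Cnorm (Csub (u k) l) < eps.

(* the limit of u, if it exists (chosen classically) *)
Definition Clim (u : nat -> Cplx) : Cplx :=
  epsilon (inhabits Czero) (fun l : Cplx => Ccv u l).

Definition Cseries_cv (f : nat -> Cplx) (l : Cplx) : Prop :=
  Ccv (fun N => Csum_to N f) l.

(* sum_{m,n>=0} F m n = l, via square partial sums *)
Definition Cdouble_series_cv (F : nat -> nat -> Cplx) (l : Cplx) : Prop :=
  Ccv (fun N => Csum_to N (fun m => Csum_to N (fun n => F m n))) l.

Definition qpoch (a : Cplx) (q : R) (n : nat) : Cplx :=
  Cprod_to n (fun j => Csub Cone (Cmul a (RtoC (q ^ j)))).
Definition qpoch_inf (a : Cplx) (q : R) : Cplx := Clim (fun N => qpoch a q N).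

Definition qbinom (m k : nat) (q : R) : Cplx :=
  Cdiv (qpoch (RtoC q) q m)
       (Cmul (qpoch (RtoC q) q k) (qpoch (RtoC q) q (m - k))).

Definition binom2 (k : nat) : nat := Nat.div (k * (k - 1)) 2.

(* k-th summand common to H and p, without the (bq;q)_{m+n-k} factor *)
Definition qterm (m n k : nat) (z1 z2 : Cplx) (q : R) : Cplx :=
  (qbinom m k q * qbinom n k q * Cpow (Copp Cone) k * RtoC (q ^ binom2 k)
   * qpoch (RtoC q) q k * Cpow z1 (m - k) * Cpow z2 (n - k))%C.

Definition qH (m n : nat) (z1 z2 : Cplx) (q : R) : Cplx :=
  Csum_to (S (Nat.min m n)) (fun k => qterm m n k z1 z2 q).

Definition qP (m n : nat) (z1 z2 b : Cplx) (q : R) : Cplx :=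
  Csum_to (S (Nat.min m n))
    (fun k => Cmul (qterm m n k z1 z2 q)
                   (qpoch (Cmul b (RtoC q)) q (m + n - k))).

From Stdlib Require Import Reals Lra Lia Arith ClassicalEpsilon.
From Coquelicot Require Complex.
Open Scope R_scope.

(* The q-binomial series [sum_j (A;q)_j/(q;q)_j x^j] and Euler's series
   [sum_j (-1)^j q^(j(j-1)/2)/(q;q)_j x^j] have coefficients obeying a first-order recurrence,
   so their sums satisfy [(1 - al y) F(y) = (1 - A y) F(q y)]; iterating and letting
   [q^M y -> 0] gives [F(x) = (Ax;q)_oo/(x;q)_oo], resp. [F(x) = (x;q)_oo] (which also shows
   that [(x;q)_N] converges at all).
   Replacing [z_i] by [z_i q^(j/2)] multiplies the [k]-th term of [p_{m,n}] by [q^(j(m+n-2k)/2)],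
   so the series in (ii) and (iii) are finite sums over [k] of q-binomial (with [A = c/b], resp.
   [A = 0]) or Euler series; these are summed in closed form and the telescoping
   [(c q;q)_M (c q^(M+1);q)_oo = (c q;q)_oo] matches both sides.
   For (i), [(bq;q)_(m+n-k)/(bq;q)_oo] is itself a q-binomial series in [j]. The square partial
   sums in [m, n] of the resulting triple sum are the partial sums of the product of Euler's
   series for [(uv q^j;q)_oo] with the series for [1/(u z1 q^j;q)_oo] and [1/(v z2 q^j;q)_oo],
   and Tannery's theorem exchanges the limit with the sum over [j]. Splitting [(x;q)_j] off
   each [(x;q)_oo] gives the second form. *)

Lemma Cplx_ext (a b : Cplx) : fst a = fst b -> snd a = snd b -> a = b.
Proof. destruct a, b; simpl; intros; subst; reflexivity. Qed.

(* [Cplx] and its operations are convertible to Coquelicot's [C]. *)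
Lemma Cfield : field_theory Czero Cone Cadd Cmul Csub Copp Cdiv Cinv (@eq Cplx).
Proof. exact Complex.C_field_theory. Qed.

Add Field Cfield_inst : Cfield.

Local Open Scope C_scope.
Arguments Cnorm z%_C_scope.
Arguments RtoC r%_R_scope.
Arguments Cadd (z w)%_C_scope.
Arguments Csub (z w)%_C_scope.
Arguments Cmul (z w)%_C_scope.
Arguments Cdiv (z w)%_C_scope.
Arguments Copp z%_C_scope.
Arguments Cinv z%_C_scope.
Arguments Cpow z%_C_scope n%_nat_scope.

Lemma Cone_neq0 : Cone <> Czero.
Proof. exact (F_1_neq_0 Cfield). Qed.

Lemma Cmul_neq0 (a b : Cplx) : a <> Czero -> b <> Czero -> a * b <> Czero.
Proof.
  intros Ha Hb E. apply Ha. replace a with (a * b * Cinv b) by (field; auto). rewrite E; ring.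
Qed.

Lemma Cmul_neq0_l (a b : Cplx) : a * b <> Czero -> a <> Czero.
Proof. intros H E. apply H. rewrite E. ring. Qed.

Lemma Cmul_neq0_r (a b : Cplx) : a * b <> Czero -> b <> Czero.
Proof. intros H E. apply H. rewrite E. ring. Qed.

Lemma RtoC_mul (a b : R) : RtoC (a * b) = RtoC a * RtoC b.
Proof. apply Cplx_ext; simpl; ring. Qed.

Lemma RtoC_sub (a b : R) : RtoC (a - b) = RtoC a - RtoC b.
Proof. apply Cplx_ext; simpl; ring. Qed.

Lemma RtoC_1 : RtoC 1 = Cone.
Proof. reflexivity. Qed.

Lemma Cmul_assoc (a b c : Cplx) : a * b * c = a * (b * c).
Proof. ring. Qed.

Lemma Cpow_S (z : Cplx) n : z ^ S n = z ^ n * z.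
Proof. reflexivity. Qed.

Lemma Cpow_RtoC (r : R) n : RtoC r ^ n = RtoC (r ^ n).
Proof. induction n; simpl; [reflexivity | rewrite IHn, RtoC_mul; ring]. Qed.

Lemma Cpow_add (z : Cplx) m n : z ^ (m + n) = z ^ m * z ^ n.
Proof.
  induction n; [rewrite Nat.add_0_r; simpl; ring |].
  rewrite Nat.add_succ_r; simpl; rewrite IHn; ring.
Qed.

Lemma Cpow_mul_distr (a b : Cplx) n : (a * b) ^ n = a ^ n * b ^ n.
Proof. induction n; simpl; [ring | rewrite IHn; ring]. Qed.

Lemma Cnorm_mul (a b : Cplx) : Cnorm (a * b) = (Cnorm a * Cnorm b)%R.
Proof. exact (Complex.Cmod_mult a b). Qed.

Lemma Cnorm_triangle (a b : Cplx) : Cnorm (a + b) <= Cnorm a + Cnorm b.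
Proof. exact (Complex.Cmod_triangle a b). Qed.

Lemma Cnorm_ge0 (a : Cplx) : 0 <= Cnorm a.
Proof. exact (Complex.Cmod_ge_0 a). Qed.

Lemma Cnorm_opp (a : Cplx) : Cnorm (- a) = Cnorm a.
Proof. exact (Complex.Cmod_opp a). Qed.

Lemma Cnorm_RtoC (r : R) : Cnorm (RtoC r) = Rabs r.
Proof. exact (Complex.Cmod_R r). Qed.

Lemma Cnorm_eq0 (a : Cplx) : Cnorm a = 0 -> a = Czero.
Proof. exact (Complex.Cmod_eq_0 a). Qed.

Lemma Cnorm_zero : Cnorm Czero = 0.
Proof. exact Complex.Cmod_0. Qed.

Lemma Cnorm_one : Cnorm Cone = 1.
Proof. exact Complex.Cmod_1. Qed.

Lemma Cnorm_inv (a : Cplx) : a <> Czero -> Cnorm (Cinv a) = / Cnorm a.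
Proof. exact (Complex.Cmod_inv a). Qed.

Lemma Cnorm_fst (a : Cplx) : Rabs (fst a) <= Cnorm a.
Proof. exact (Complex.re_le_Cmod a). Qed.

Lemma Cnorm_snd (a : Cplx) : Rabs (snd a) <= Cnorm a.
Proof. exact (Rle_trans _ _ _ (Rmax_r _ _) (Complex.Rmax_Cmod a)). Qed.

Lemma Cnorm_pos (a : Cplx) : a <> Czero -> 0 < Cnorm a.
Proof. exact (proj1 (Complex.Cmod_gt_0 a)). Qed.

Lemma Cnorm_pow (a : Cplx) n : Cnorm (a ^ n) = (Cnorm a ^ n)%R.
Proof. induction n; simpl; [apply Cnorm_one | rewrite Cnorm_mul, IHn; ring]. Qed.

Lemma Cnorm_sub (a b : Cplx) : Cnorm (a - b) <= Cnorm a + Cnorm b.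
Proof. unfold Csub. rewrite <- (Cnorm_opp b). apply Cnorm_triangle. Qed.

Lemma Cnorm_sub_sym (a b : Cplx) : Cnorm (a - b) = Cnorm (b - a).
Proof. replace (a - b) with (- (b - a)) by ring. apply Cnorm_opp. Qed.

Lemma Cnorm_sub_triangle (a b c : Cplx) : Cnorm (a - c) <= Cnorm (a - b) + Cnorm (b - c).
Proof. replace (a - c) with ((a - b) + (b - c)) by ring. apply Cnorm_triangle. Qed.

Lemma Cnorm_le_parts (a : Cplx) : Cnorm a <= Rabs (fst a) + Rabs (snd a).
Proof.
  destruct a as [x y]. unfold Cnorm; simpl.
  rewrite <- (sqrt_Rsqr (Rabs x + Rabs y)) by (pose proof (Rabs_pos x); pose proof (Rabs_pos y); lra).
  apply sqrt_le_1_alt. unfold Rsqr.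
  assert (Ex : (x ^ 2 = Rabs x * Rabs x)%R) by (rewrite <- Rabs_mult, Rabs_pos_eq; nra).
  assert (Ey : (y ^ 2 = Rabs y * Rabs y)%R) by (rewrite <- Rabs_mult, Rabs_pos_eq; nra).
  pose proof (Rabs_pos x); pose proof (Rabs_pos y). nra.
Qed.

Lemma Cnorm_scale_le (z T : Cplx) : Cnorm T <= 1 -> Cnorm (z * T) <= Cnorm z.
Proof. intros HT. rewrite Cnorm_mul. pose proof (Cnorm_ge0 z); pose proof (Cnorm_ge0 T). nra. Qed.

Fixpoint Rsum_to (n : nat) (f : nat -> R) : R :=
  match n with O => 0%R | S n => (Rsum_to n f + f n)%R end.

Lemma Csum_S n f : Csum_to (S n) f = Csum_to n f + f n.
Proof. reflexivity. Qed.

Lemma Csum_ext N f g : (forall k, (k < N)%nat -> f k = g k) -> Csum_to N f = Csum_to N g.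
Proof. induction N; intros H; simpl; auto. rewrite IHN, H; auto. Qed.

Lemma Csum_zero N : Csum_to N (fun _ => Czero) = Czero.
Proof. induction N; simpl; auto. rewrite IHN; ring. Qed.

Lemma Csum_add N f g : Csum_to N (fun k => f k + g k) = Csum_to N f + Csum_to N g.
Proof. induction N; simpl; [apply Cplx_ext; simpl; ring | rewrite IHN; ring]. Qed.

Lemma Csum_sub N f g : Csum_to N (fun k => f k - g k) = Csum_to N f - Csum_to N g.
Proof. induction N; simpl; [apply Cplx_ext; simpl; ring | rewrite IHN; ring]. Qed.

Lemma Csum_scal_l N c f : Csum_to N (fun k => c * f k) = c * Csum_to N f.
Proof. induction N; simpl; [apply Cplx_ext; simpl; ring | rewrite IHN; ring]. Qed.

Lemma Csum_scal_r N c f : Csum_to N (fun k => f k * c) = Csum_to N f * c.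
Proof. induction N; simpl; [apply Cplx_ext; simpl; ring | rewrite IHN; ring]. Qed.

Lemma Csum_mul A B f g :
  Csum_to A f * Csum_to B g = Csum_to A (fun i => Csum_to B (fun j => f i * g j)).
Proof. rewrite <- Csum_scal_r. apply Csum_ext; intros i _. apply eq_sym, Csum_scal_l. Qed.

Lemma Csum_split L n f : Csum_to (L + n) f = Csum_to L f + Csum_to n (fun i => f (L + i)%nat).
Proof.
  induction n; simpl; [rewrite Nat.add_0_r; ring |].
  rewrite Nat.add_succ_r; simpl; rewrite IHn; ring.
Qed.

Lemma Csum_exchange A B f :
  Csum_to A (fun i => Csum_to B (fun j => f i j)) = Csum_to B (fun j => Csum_to A (fun i => f i j)).
Proof. induction A; simpl; [rewrite Csum_zero; auto | rewrite IHA, <- Csum_add; auto]. Qed.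

Lemma Csum_extend N M f :
  (forall k, (N <= k)%nat -> f k = Czero) -> (N <= M)%nat -> Csum_to M f = Csum_to N f.
Proof. intros H HM. induction HM; auto. simpl. rewrite IHHM, H by lia. ring. Qed.

Lemma Csum_from k N g :
  Csum_to N (fun m => if (k <=? m)%nat then g (m - k)%nat else Czero) = Csum_to (N - k) g.
Proof.
  induction N; [reflexivity |]. rewrite Csum_S, IHN. destruct (Nat.leb_spec k N).
  - replace (S N - k)%nat with (S (N - k)) by lia. reflexivity.
  - replace (S N - k)%nat with (N - k)%nat by lia. ring.
Qed.

Lemma Rsum_ext N f g : (forall k, (k < N)%nat -> f k = g k) -> Rsum_to N f = Rsum_to N g.
Proof. induction N; intros H; simpl; auto. rewrite IHN, H; auto. Qed.

Lemma Rsum_split L n f :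
  Rsum_to (L + n) f = (Rsum_to L f + Rsum_to n (fun i => f (L + i)%nat))%R.
Proof.
  induction n; simpl; [rewrite Nat.add_0_r; ring |].
  rewrite Nat.add_succ_r; simpl; rewrite IHn; ring.
Qed.

Lemma Rsum_ge0 N f : (forall k, 0 <= f k) -> 0 <= Rsum_to N f.
Proof. intros H; induction N; simpl; [lra | specialize (H N); lra]. Qed.

Lemma Rsum_le N f g : (forall k, (k < N)%nat -> f k <= g k) -> Rsum_to N f <= Rsum_to N g.
Proof.
  induction N; intros H; simpl; [lra |].
  assert (f N <= g N) by (apply H; lia).
  assert (Rsum_to N f <= Rsum_to N g) by (apply IHN; intros; apply H; lia). lra.
Qed.

Lemma Rsum_le_mono N M f : (forall k, 0 <= f k) -> (N <= M)%nat -> Rsum_to N f <= Rsum_to M f.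
Proof. intros H HM; induction HM; simpl; [lra | specialize (H m); lra]. Qed.

Lemma Rsum_term_le N f k : (forall k, 0 <= f k) -> (k < N)%nat -> f k <= Rsum_to N f.
Proof.
  intros H Hk. apply Rle_trans with (Rsum_to (S k) f).
  - simpl. pose proof (Rsum_ge0 k f H). lra.
  - apply Rsum_le_mono; auto.
Qed.

Lemma Rsum_scal N (c : R) f : Rsum_to N (fun k => c * f k)%R = (c * Rsum_to N f)%R.
Proof. induction N; simpl; [ring | rewrite IHN; ring]. Qed.

Lemma Csum_norm_le N f : Cnorm (Csum_to N f) <= Rsum_to N (fun k => Cnorm (f k)).
Proof.
  induction N; simpl; [rewrite Cnorm_zero; lra |].
  eapply Rle_trans; [apply Cnorm_triangle | lra].
Qed.

(** * Limits of complex sequences *)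

Lemma Ccv_unique u l1 l2 : Ccv u l1 -> Ccv u l2 -> l1 = l2.
Proof.
  intros H1 H2. destruct (Req_dec (Cnorm (l1 - l2)) 0) as [E|E].
  - replace l1 with ((l1 - l2) + l2) by ring. rewrite (Cnorm_eq0 _ E); ring.
  - assert (P : 0 < Cnorm (l1 - l2) / 2) by (pose proof (Cnorm_ge0 (l1 - l2)); lra).
    destruct (H1 _ P) as [N1 HN1], (H2 _ P) as [N2 HN2].
    specialize (HN1 (N1 + N2)%nat ltac:(lia)); specialize (HN2 (N1 + N2)%nat ltac:(lia)).
    pose proof (Cnorm_sub_triangle l1 (u (N1 + N2)%nat) l2).
    rewrite (Cnorm_sub_sym l1 (u _)) in H. lra.
Qed.

Lemma Clim_correct u l : Ccv u l -> Clim u = l.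
Proof.
  intros H. apply (Ccv_unique u); [| exact H].
  apply (epsilon_spec (inhabits Czero) (fun l => Ccv u l)). eauto.
Qed.

Lemma Ccv_ext_eventually u v l N0 :
  (forall n, (N0 <= n)%nat -> u n = v n) -> Ccv u l -> Ccv v l.
Proof.
  intros E H eps Heps. destruct (H eps Heps) as [N HN]. exists (N + N0)%nat.
  intros k Hk. rewrite <- E by lia. apply HN; lia.
Qed.

Lemma Ccv_ext u v l : (forall n, u n = v n) -> Ccv u l -> Ccv v l.
Proof. intros E. apply Ccv_ext_eventually with 0%nat. auto. Qed.

Lemma Ccv_const c : Ccv (fun _ => c) c.
Proof.
  intros eps Heps. exists 0%nat. intros.
  replace (c - c) with Czero by ring. rewrite Cnorm_zero; auto.
Qed.

Lemma Ccv_shift u l M : Ccv u l -> Ccv (fun n => u (M + n)%nat) l.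
Proof. intros H eps Heps. destruct (H eps Heps) as [N HN]. exists N. intros; apply HN; lia. Qed.

Lemma Ccv_sub_index u l k : Ccv u l -> Ccv (fun N => u (N - k)%nat) l.
Proof.
  intros H eps Heps. destruct (H eps Heps) as [N HN]. exists (N + k)%nat. intros; apply HN; lia.
Qed.

Lemma Ccv_add u v a b : Ccv u a -> Ccv v b -> Ccv (fun n => u n + v n) (a + b).
Proof.
  intros Hu Hv eps Heps.
  destruct (Hu (eps / 2)%R ltac:(lra)) as [N1 H1], (Hv (eps / 2)%R ltac:(lra)) as [N2 H2].
  exists (N1 + N2)%nat. intros k Hk.
  replace (u k + v k - (a + b)) with ((u k - a) + (v k - b)) by ring.
  specialize (H1 k ltac:(lia)); specialize (H2 k ltac:(lia)).
  eapply Rle_lt_trans; [apply Cnorm_triangle | lra].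
Qed.

Lemma Ccv_bounded u l : Ccv u l -> exists M, 0 <= M /\ forall n, Cnorm (u n) <= M.
Proof.
  intros H. destruct (H 1 Rlt_0_1) as [N HN].
  pose proof (Rsum_ge0 N (fun k => Cnorm (u k)) (fun k => Cnorm_ge0 _)).
  pose proof (Cnorm_ge0 l).
  exists (Rsum_to N (fun k => Cnorm (u k)) + Cnorm l + 1)%R. split; [lra |]. intros n.
  destruct (le_lt_dec N n) as [Hn | Hn].
  - specialize (HN n Hn). replace (u n) with ((u n - l) + l) by ring.
    pose proof (Cnorm_triangle (u n - l) l). lra.
  - pose proof (Rsum_term_le N (fun k => Cnorm (u k)) n (fun k => Cnorm_ge0 _) Hn). lra.
Qed.

Lemma Ccv_mul u v a b : Ccv u a -> Ccv v b -> Ccv (fun n => u n * v n) (a * b).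
Proof.
  intros Hu Hv eps Heps.
  destruct (Ccv_bounded u a Hu) as [M [HM0 HM]].
  pose proof (Cnorm_ge0 b).
  set (e1 := (eps / (2 * (Cnorm b + 1)))%R). set (e2 := (eps / (2 * (M + 1)))%R).
  assert (He1 : 0 < e1) by (apply Rdiv_lt_0_compat; lra).
  assert (He2 : 0 < e2) by (apply Rdiv_lt_0_compat; lra).
  destruct (Hu _ He1) as [N1 H1], (Hv _ He2) as [N2 H2].
  exists (N1 + N2)%nat. intros k Hk.
  specialize (H1 k ltac:(lia)); specialize (H2 k ltac:(lia)); specialize (HM k).
  replace (u k * v k - a * b) with (u k * (v k - b) + (u k - a) * b) by ring.
  eapply Rle_lt_trans; [apply Cnorm_triangle |]. rewrite !Cnorm_mul.
  assert (Cnorm (u k) * Cnorm (v k - b) <= M * e2)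
    by (apply Rmult_le_compat; auto using Cnorm_ge0; lra).
  assert (Cnorm (u k - a) * Cnorm b <= e1 * Cnorm b) by (apply Rmult_le_compat_r; lra).
  assert (M * e2 < eps / 2)%R.
  { unfold e2. apply (Rmult_lt_reg_r (2 * (M + 1))); [lra |]. field_simplify; lra. }
  assert (e1 * Cnorm b < eps / 2)%R.
  { unfold e1. apply (Rmult_lt_reg_r (2 * (Cnorm b + 1))); [lra |]. field_simplify; lra. }
  lra.
Qed.

Lemma Ccv_scal c u a : Ccv u a -> Ccv (fun n => c * u n) (c * a).
Proof. apply Ccv_mul, Ccv_const. Qed.

Lemma Ccv_sub u v a b : Ccv u a -> Ccv v b -> Ccv (fun n => u n - v n) (a - b).
Proof.
  intros Hu Hv. apply Ccv_add; auto.
  apply (Ccv_ext (fun n => - Cone * v n)); [intros; ring |].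
  replace (- b) with (- Cone * b) by ring. apply Ccv_scal; auto.
Qed.

Lemma Ccv_norm_le u l r N0 :
  Ccv u l -> (forall n, (N0 <= n)%nat -> Cnorm (u n) <= r) -> Cnorm l <= r.
Proof.
  intros H Hr. apply Rnot_lt_le. intro C.
  destruct (H (Cnorm l - r)%R ltac:(lra)) as [N HN].
  specialize (HN (N + N0)%nat ltac:(lia)). specialize (Hr (N + N0)%nat ltac:(lia)).
  pose proof (Cnorm_sub_triangle l (u (N + N0)%nat) Czero).
  replace (l - Czero) with l in H0 by ring.
  replace (u (N + N0)%nat - Czero) with (u (N + N0)%nat) in H0 by ring.
  rewrite Cnorm_sub_sym in H0. lra.
Qed.

Lemma Ccv_inv u l : Ccv u l -> l <> Czero -> Ccv (fun n => Cinv (u n)) (Cinv l).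
Proof.
  intros H Hl eps Heps. pose proof (Cnorm_pos l Hl) as Pl.
  set (d := Rmin (Cnorm l / 2) (eps * (Cnorm l * Cnorm l) / 2)).
  assert (Pd : 0 < d).
  { apply Rmin_pos; [lra |]. apply Rmult_lt_0_compat; [apply Rmult_lt_0_compat; nra | lra]. }
  destruct (H d Pd) as [N HN]. exists N. intros k Hk. specialize (HN k Hk).
  assert (Hd1 : d <= Cnorm l / 2) by apply Rmin_l.
  assert (Hd2 : d <= eps * (Cnorm l * Cnorm l) / 2) by apply Rmin_r.
  assert (Huk : Cnorm l / 2 <= Cnorm (u k)).
  { pose proof (Cnorm_sub_triangle l (u k) Czero).
    replace (l - Czero) with l in H0 by ring. replace (u k - Czero) with (u k) in H0 by ring.
    rewrite Cnorm_sub_sym in H0. lra. }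
  assert (Hu0 : u k <> Czero) by (intro E; rewrite E, Cnorm_zero in Huk; lra).
  replace (Cinv (u k) - Cinv l) with ((l - u k) * Cinv (u k) * Cinv l) by (field; auto).
  rewrite !Cnorm_mul, !Cnorm_inv, Cnorm_sub_sym by auto.
  apply (Rmult_lt_reg_r (Cnorm (u k) * Cnorm l)); [nra |].
  replace (Cnorm (u k - l) * / Cnorm (u k) * / Cnorm l * (Cnorm (u k) * Cnorm l))%R
    with (Cnorm (u k - l)) by (field; lra).
  nra.
Qed.

Lemma Ccv_cauchy u :
  (forall eps, 0 < eps -> exists N, forall n m, (N <= n)%nat -> (N <= m)%nat ->
     Cnorm (u n - u m) < eps) ->
  exists l, Ccv u l.
Proof.
  intros H.
  assert (C1 : Cauchy_crit (fun n => fst (u n))).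
  { intros eps Heps. destruct (H eps Heps) as [N HN]. exists N. intros n m Hn Hm.
    eapply Rle_lt_trans; [| apply (HN n m Hn Hm)].
    eapply Rle_trans; [| apply Cnorm_fst]. right; unfold R_dist; simpl; f_equal; ring. }
  assert (C2 : Cauchy_crit (fun n => snd (u n))).
  { intros eps Heps. destruct (H eps Heps) as [N HN]. exists N. intros n m Hn Hm.
    eapply Rle_lt_trans; [| apply (HN n m Hn Hm)].
    eapply Rle_trans; [| apply Cnorm_snd]. right; unfold R_dist; simpl; f_equal; ring. }
  destruct (R_complete _ C1) as [a Ha], (R_complete _ C2) as [b Hb].
  exists (a, b). intros eps Heps.
  destruct (Ha (eps / 2)%R ltac:(lra)) as [N1 H1], (Hb (eps / 2)%R ltac:(lra)) as [N2 H2].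
  exists (N1 + N2)%nat. intros k Hk.
  specialize (H1 k ltac:(lia)); specialize (H2 k ltac:(lia)). unfold R_dist in *.
  eapply Rle_lt_trans; [apply Cnorm_le_parts | simpl; unfold Rminus in *; lra].
Qed.

(** * Absolutely convergent series *)

Definition abs_summable (c : nat -> Cplx) : Prop :=
  exists B, forall N, Rsum_to N (fun j => Cnorm (c j)) <= B.

Lemma abs_summable_tail c : abs_summable c ->
  exists A, (forall N, Rsum_to N (fun j => Cnorm (c j)) <= A) /\
    forall eps, 0 < eps -> exists L, forall M, (L <= M)%nat ->
      A - Rsum_to M (fun j => Cnorm (c j)) < eps.
Proof.
  intros [B HB].
  assert (G : Un_growing (fun N => Rsum_to N (fun j => Cnorm (c j)))).
  { intros n; simpl. pose proof (Cnorm_ge0 (c n)); lra. }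
  destruct (growing_cv _ G) as [A HA]; [exists B; intros x [n ->]; apply HB |].
  pose proof (growing_ineq _ A G HA) as HA2.
  exists A; split; auto. intros eps Heps. destruct (HA eps Heps) as [L HL].
  exists L. intros M HM. specialize (HL M HM). specialize (HA2 M).
  unfold R_dist in HL. rewrite Rabs_left1 in HL; lra.
Qed.

Lemma abs_summable_cv c : abs_summable c -> exists l, Cseries_cv c l.
Proof.
  intros Hs. destruct (abs_summable_tail c Hs) as [A [HA HT]].
  apply Ccv_cauchy. intros eps Heps. destruct (HT eps Heps) as [L HL]. exists L.
  assert (K : forall n m, (L <= n)%nat -> (n <= m)%nat ->
                Cnorm (Csum_to m c - Csum_to n c) < eps).
  { intros n m Hn Hm. replace m with (n + (m - n))%nat by lia.
    rewrite Csum_split. replace (Csum_to n c + _ - Csum_to n c) with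
      (Csum_to (m - n) (fun i => c (n + i)%nat)) by ring.
    eapply Rle_lt_trans; [apply Csum_norm_le |].
    specialize (HL n Hn). specialize (HA (n + (m - n))%nat). rewrite Rsum_split in HA. lra. }
  intros n m Hn Hm. destruct (le_lt_dec n m).
  - rewrite Cnorm_sub_sym. apply K; auto.
  - apply K; lia.
Qed.

Lemma abs_summable_le a b K :
  0 <= K -> (forall j, Cnorm (a j) <= K * Cnorm (b j)) -> abs_summable b -> abs_summable a.
Proof.
  intros HK H [B HB]. exists (K * B)%R. intros N.
  eapply Rle_trans; [apply Rsum_le; intros; apply H |].
  rewrite Rsum_scal. apply Rmult_le_compat_l; auto.
Qed.

Lemma abs_summable_lim0 a : abs_summable a -> Ccv a Czero.
Proof.
  intros Hs. destruct (abs_summable_tail a Hs) as [A [HA HT]].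
  intros eps Heps. destruct (HT eps Heps) as [L HL]. exists L. intros k Hk.
  replace (a k - Czero) with (a k) by ring.
  specialize (HL k Hk). specialize (HA (S k)). simpl in HA. lra.
Qed.

Lemma abs_summable_ratio (a : nat -> Cplx) (rho : R) (J : nat) :
  0 <= rho < 1 -> (forall j, (J <= j)%nat -> Cnorm (a (S j)) <= rho * Cnorm (a j)) ->
  abs_summable a.
Proof.
  intros Hr H.
  assert (Hinv : 0 < / (1 - rho)) by (apply Rinv_0_lt_compat; lra).
  (* the tail from J is dominated by the geometric series of ratio rho *)
  assert (Tail : forall n, Rsum_to n (fun i => Cnorm (a (J + i)%nat))
                   + Cnorm (a (J + n)%nat) / (1 - rho) <= Cnorm (a J) / (1 - rho)).
  { induction n; simpl; [rewrite Nat.add_0_r; lra |].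
    rewrite Nat.add_succ_r. specialize (H (J + n)%nat ltac:(lia)).
    assert (Cnorm (a (S (J + n))) / (1 - rho) <= rho * Cnorm (a (J + n)%nat) / (1 - rho))
      by (apply Rmult_le_compat_r; lra).
    assert (rho * Cnorm (a (J + n)%nat) / (1 - rho)
            = Cnorm (a (J + n)%nat) / (1 - rho) - Cnorm (a (J + n)%nat))%R by (field; lra).
    lra. }
  exists (Rsum_to J (fun j => Cnorm (a j)) + Cnorm (a J) / (1 - rho))%R.
  intros N. assert (Pos : forall k, 0 <= Cnorm (a k) / (1 - rho))
    by (intros; apply Rmult_le_pos; [apply Cnorm_ge0 | lra]).
  destruct (le_lt_dec N J).
  - pose proof (Rsum_le_mono N J (fun j => Cnorm (a j)) (fun _ => Cnorm_ge0 _) l).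
    specialize (Pos J). lra.
  - replace N with (J + (N - J))%nat by lia. rewrite Rsum_split.
    specialize (Tail (N - J)%nat). specialize (Pos (J + (N - J))%nat). lra.
Qed.

Lemma Cseries_cv_ext a b l : (forall j, a j = b j) -> Cseries_cv a l -> Cseries_cv b l.
Proof. intros E. apply Ccv_ext. intros; apply Csum_ext; auto. Qed.

Lemma Cseries_cv_add a b la lb :
  Cseries_cv a la -> Cseries_cv b lb -> Cseries_cv (fun j => a j + b j) (la + lb).
Proof.
  intros Ha Hb. eapply Ccv_ext; [| apply (Ccv_add _ _ _ _ Ha Hb)].
  intros; simpl. rewrite Csum_add; auto.
Qed.

Lemma Cseries_cv_scal c a la : Cseries_cv a la -> Cseries_cv (fun j => c * a j) (c * la).
Proof.
  intros Ha. eapply Ccv_ext; [| apply (Ccv_scal c _ _ Ha)].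
  intros; simpl. rewrite Csum_scal_l; auto.
Qed.

Lemma Cseries_cv_Csum K (g : nat -> nat -> Cplx) (l : nat -> Cplx) :
  (forall k, (k < K)%nat -> Cseries_cv (g k) (l k)) ->
  Cseries_cv (fun j => Csum_to K (fun k => g k j)) (Csum_to K l).
Proof.
  induction K; intros H.
  - eapply Ccv_ext; [| apply Ccv_const]. intros; simpl. rewrite Csum_zero; auto.
  - apply Cseries_cv_add; [apply IHK; auto | apply H; lia].
Qed.

Lemma Cseries_cv_finite a N :
  (forall j, (N <= j)%nat -> a j = Czero) -> Cseries_cv a (Csum_to N a).
Proof.
  intros H. apply (Ccv_ext_eventually (fun _ => Csum_to N a) _ _ N); [| apply Ccv_const].
  intros n Hn. symmetry; apply Csum_extend; auto.
Qed.

Lemma Rsum_lim0 (L : nat) (h : nat -> nat -> R) :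
  (forall j, (j < L)%nat -> forall eps, 0 < eps ->
     exists N, forall n, (N <= n)%nat -> h n j < eps) ->
  forall eps, 0 < eps -> exists N, forall n, (N <= n)%nat -> Rsum_to L (fun j => h n j) < eps.
Proof.
  induction L; intros H eps Heps; [exists 0%nat; intros; simpl; lra |].
  destruct (IHL ltac:(intros j Hj; apply H; lia) (eps / 2)%R ltac:(lra)) as [N1 H1].
  destruct (H L (Nat.lt_succ_diag_r L) (eps / 2)%R ltac:(lra)) as [N2 H2].
  exists (N1 + N2)%nat. intros n Hn. simpl.
  specialize (H1 n ltac:(lia)); specialize (H2 n ltac:(lia)). lra.
Qed.

Lemma Cseries_split_bound (c h : nat -> Cplx) (l : Cplx) (L : nat) (K A : R) :
  Cseries_cv (fun j => c j * h j) l -> (forall j, Cnorm (h j) <= K) ->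
  (forall N, Rsum_to N (fun j => Cnorm (c j)) <= A) ->
  Cnorm l <= Rsum_to L (fun j => Cnorm (c j) * Cnorm (h j))%R
             + K * (A - Rsum_to L (fun j => Cnorm (c j))).
Proof.
  intros Hl Hh HA. apply (Ccv_norm_le _ _ _ L Hl). intros M HM.
  replace M with (L + (M - L))%nat by lia. rewrite Csum_split.
  eapply Rle_trans; [apply Cnorm_triangle | apply Rplus_le_compat].
  - eapply Rle_trans; [apply Csum_norm_le |]. right. apply Rsum_ext. intros; apply Cnorm_mul.
  - eapply Rle_trans; [apply Csum_norm_le |].
    apply Rle_trans with (K * Rsum_to (M - L) (fun i => Cnorm (c (L + i)%nat)))%R.
    + rewrite <- Rsum_scal. apply Rsum_le. intros k _. rewrite Cnorm_mul, Rmult_comm.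
      apply Rmult_le_compat_r; auto using Cnorm_ge0.
    + assert (0 <= K) by (eapply Rle_trans; [apply Cnorm_ge0 | apply (Hh 0%nat)]).
      apply Rmult_le_compat_l; auto.
      specialize (HA (L + (M - L))%nat). rewrite Rsum_split in HA. lra.
Qed.

(* Tannery's theorem: dominated convergence for series. *)
Lemma tannery (c : nat -> Cplx) (f : nat -> nat -> Cplx) (g V : nat -> Cplx) (S : Cplx) (K : R) :
  abs_summable c -> (forall N j, Cnorm (f N j) <= K) -> (forall j, Ccv (fun N => f N j) (g j)) ->
  (forall N, Cseries_cv (fun j => c j * f N j) (V N)) -> Cseries_cv (fun j => c j * g j) S ->
  Ccv V S.
Proof.
  intros Hs Hf Hg HV HS eps Heps.
  assert (HK : 0 <= K) by (eapply Rle_trans; [apply Cnorm_ge0 | apply (Hf 0%nat 0%nat)]).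
  assert (Hgb : forall j, Cnorm (g j) <= K)
    by (intros j; apply (Ccv_norm_le _ _ _ 0%nat (Hg j)); intros; apply Hf).
  destruct (abs_summable_tail c Hs) as [A [HA HT]].
  destruct (HT (eps / (4 * (K + 1)))%R ltac:(apply Rdiv_lt_0_compat; lra)) as [L HL].
  destruct (Rsum_lim0 L (fun n j => Cnorm (c j) * Cnorm (f n j - g j))%R)
    with (eps := (eps / 2)%R) as [N0 HN0]; [| lra |].
  { intros j _ e He. pose proof (Cnorm_ge0 (c j)).
    destruct (Hg j (e / (Cnorm (c j) + 1))%R) as [N HN]; [apply Rdiv_lt_0_compat; lra |].
    exists N. intros n Hn. specialize (HN n Hn).
    apply Rle_lt_trans with (Cnorm (c j) * (e / (Cnorm (c j) + 1)))%R;
      [apply Rmult_le_compat_l; lra |].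
    apply (Rmult_lt_reg_r (Cnorm (c j) + 1)); [lra |].
    replace (Cnorm (c j) * (e / (Cnorm (c j) + 1)) * (Cnorm (c j) + 1))%R
      with (Cnorm (c j) * e)%R by (field; lra). nra. }
  exists N0. intros N HN.
  assert (Hd : Cseries_cv (fun j => c j * (f N j - g j)) (V N - S)).
  { eapply Ccv_ext; [| apply (Ccv_sub _ _ _ _ (HV N) HS)].
    intros M; simpl. rewrite <- Csum_sub. apply Csum_ext. intros; ring. }
  (* the head of the series is small by pointwise convergence, its tail by summability *)
  assert (Bd : Cnorm (V N - S) <= Rsum_to L (fun j => Cnorm (c j) * Cnorm (f N j - g j))%R
                 + 2 * K * (A - Rsum_to L (fun j => Cnorm (c j)))).
  { apply (Cseries_split_bound c (fun j => f N j - g j)); auto.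
    intros j. eapply Rle_trans; [apply Cnorm_sub |]. pose proof (Hf N j); pose proof (Hgb j); lra. }
  specialize (HN0 N HN). specialize (HL L (le_n L)).
  assert (2 * K * (A - Rsum_to L (fun j => Cnorm (c j))) <= 2 * K * (eps / (4 * (K + 1))))
    by (apply Rmult_le_compat_l; lra).
  assert (2 * K * (eps / (4 * (K + 1))) < eps / 2).
  { apply (Rmult_lt_reg_r (4 * (K + 1))); [lra |].
    replace (2 * K * (eps / (4 * (K + 1))) * (4 * (K + 1)))%R with (2 * K * eps)%R
      by (field; lra). nra. }
  lra.
Qed.

(** * Power series *)

Definition pseries (c : nat -> Cplx) (y : Cplx) : Cplx :=
  Clim (fun N => Csum_to N (fun j => c j * y ^ j)).

Lemma Cnorm_pow_le (x y : Cplx) j : Cnorm y <= Cnorm x -> Cnorm (y ^ j) <= Cnorm (x ^ j).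
Proof. intros H. rewrite !Cnorm_pow. apply pow_incr. split; auto using Cnorm_ge0. Qed.

Lemma abs_summable_pow_le (c : nat -> Cplx) x y : Cnorm y <= Cnorm x ->
  abs_summable (fun j => c j * x ^ j) -> abs_summable (fun j => c j * y ^ j).
Proof.
  intros Hy. apply (abs_summable_le _ _ 1%R); [lra |]. intros j.
  rewrite !Cnorm_mul, Rmult_1_l. apply Rmult_le_compat_l; auto using Cnorm_ge0, Cnorm_pow_le.
Qed.

Lemma pseries_cv (c : nat -> Cplx) x y : Cnorm y <= Cnorm x ->
  abs_summable (fun j => c j * x ^ j) -> Cseries_cv (fun j => c j * y ^ j) (pseries c y).
Proof.
  intros Hy Hs. destruct (abs_summable_cv _ (abs_summable_pow_le c x y Hy Hs)) as [l Hl].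
  unfold pseries. rewrite (Clim_correct _ _ Hl). auto.
Qed.

Lemma pseries_sub_const_le (c : nat -> Cplx) x y B t :
  (forall N, Rsum_to N (fun j => Cnorm (c j * x ^ j)) <= B) ->
  0 <= t <= 1 -> Cnorm y <= t * Cnorm x -> Cnorm (pseries c y - c 0%nat) <= t * B.
Proof.
  intros HB Ht Hy.
  assert (Hyx : Cnorm y <= Cnorm x) by (pose proof (Cnorm_ge0 x); nra).
  assert (Hd : Ccv (fun N => Csum_to N (fun j => c j * y ^ j) - c 0%nat) (pseries c y - c 0%nat))
    by (apply Ccv_sub; [apply (pseries_cv c x y Hyx); exists B; auto | apply Ccv_const]).
  apply (Ccv_norm_le _ _ _ 1%nat Hd). intros N HN.
  replace N with (1 + (N - 1))%nat by lia. rewrite Csum_split. simpl Csum_to at 1.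
  replace (Czero + c 0%nat * Cone + _ - c 0%nat)
    with (Csum_to (N - 1) (fun i => c (1 + i)%nat * y ^ (1 + i))) by ring.
  eapply Rle_trans; [apply Csum_norm_le |].
  apply Rle_trans with (t * Rsum_to (N - 1) (fun i => Cnorm (c (1 + i)%nat * x ^ (1 + i))%C))%R.
  - rewrite <- Rsum_scal. apply Rsum_le. intros k _. rewrite !Cnorm_mul, !Cnorm_pow.
    (* |y|^(k+1) <= t^(k+1) |x|^(k+1) <= t |x|^(k+1) *)
    assert (E : (Cnorm y ^ (1 + k) <= t * Cnorm x ^ (1 + k))%R).
    { apply Rle_trans with ((t * Cnorm x) ^ (1 + k))%R.
      - apply pow_incr. split; auto using Cnorm_ge0.
      - rewrite Rpow_mult_distr. simpl pow. pose proof (pow_le (Cnorm x) k (Cnorm_ge0 x)).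
        assert (t ^ k <= 1)%R by (rewrite <- (pow1 k); apply pow_incr; lra).
        assert (0 <= t * (Cnorm x * Cnorm x ^ k))%R
          by (apply Rmult_le_pos; [lra | apply Rmult_le_pos; auto using Cnorm_ge0]).
        nra. }
    pose proof (Cnorm_ge0 (c (1 + k)%nat)). nra.
  - apply Rmult_le_compat_l; [lra |].
    specialize (HB (1 + (N - 1))%nat). rewrite Rsum_split in HB.
    pose proof (Rsum_ge0 1 (fun j => Cnorm (c j * x ^ j)) (fun _ => Cnorm_ge0 _)). lra.
Qed.

Lemma one_sub_RtoC_neq0 (r : R) : r < 1 -> Cone - RtoC r <> Czero.
Proof. intros H E. injection E. intros _ E1. lra. Qed.

Lemma ratio_margin (a b : R) : 0 <= a < 1 -> 0 <= b ->
  exists rho delta, 0 <= rho < 1 /\ 0 < delta /\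
    forall s t, 0 <= s <= t -> t <= delta -> a + b * t <= rho * (1 - s).
Proof.
  intros Ha Hb. exists ((1 + a) / 2)%R, ((1 - a) / (2 * (b + 2)))%R.
  split; [lra |]. split; [apply Rdiv_lt_0_compat; lra |]. intros s t Hs Ht.
  assert (t * (2 * (b + 2)) <= 1 - a)%R.
  { apply (Rmult_le_compat_r (2 * (b + 2))) in Ht; [| lra].
    unfold Rdiv in Ht. rewrite Rmult_assoc, Rinv_l in Ht by lra. lra. }
  nra.
Qed.

(** * Series with q-hypergeometric coefficients *)

Section QSeries.

Variable q : R.
Hypothesis Hq : 0 < q < 1.

Lemma qpow_bounds n : 0 < q ^ n <= 1.
Proof.
  split; [apply pow_lt; lra |].
  induction n; simpl; [lra |]. pose proof (pow_lt q n ltac:(lra)). nra.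
Qed.

Lemma qpow_le_mono J j : (J <= j)%nat -> q ^ j <= q ^ J.
Proof.
  intros H. replace j with (J + (j - J))%nat by lia. rewrite pow_add.
  pose proof (qpow_bounds J). pose proof (qpow_bounds (j - J)). nra.
Qed.

Lemma qpow_S_lt1 n : q ^ S n < 1.
Proof. simpl. pose proof (qpow_bounds n). nra. Qed.

Lemma qpow_eventually_le delta : 0 < delta -> exists J, forall j, (J <= j)%nat -> q ^ j <= delta.
Proof.
  intros Hd. destruct (pow_lt_1_zero q ltac:(rewrite Rabs_pos_eq; lra) delta Hd) as [J HJ].
  exists J. intros j Hj. specialize (HJ j Hj).
  rewrite Rabs_pos_eq in HJ by (pose proof (qpow_bounds j); lra). lra.
Qed.

Lemma Cnorm_mul_qpow_le (y : Cplx) n : Cnorm (y * RtoC (q ^ n)) <= Cnorm y.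
Proof.
  apply Cnorm_scale_le. rewrite Cnorm_RtoC. pose proof (qpow_bounds n).
  rewrite Rabs_pos_eq; lra.
Qed.

Lemma RtoC_qpow_S n : RtoC (q ^ S n) = RtoC q * RtoC (q ^ n).
Proof. apply RtoC_mul. Qed.

Lemma qpoch_S a n : qpoch a q (S n) = qpoch a q n * (Cone - a * RtoC (q ^ n)).
Proof. reflexivity. Qed.

Lemma qpoch_q_neq0 n : qpoch (RtoC q) q n <> Czero.
Proof.
  induction n; [apply Cone_neq0 |].
  rewrite qpoch_S, <- RtoC_qpow_S. apply Cmul_neq0; auto.
  apply one_sub_RtoC_neq0, qpow_S_lt1.
Qed.

(* The coefficients of both the q-binomial and the Euler series satisfy this recurrence;
   it makes [pseries c] satisfy [(1 - al y) F(y) = (1 - A y) F(q y)]. *)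
Definition qrec (al A : Cplx) (c : nat -> Cplx) : Prop :=
  forall j, c (S j) * (Cone - RtoC (q ^ S j)) = c j * (al - A * RtoC (q ^ j)).

Variables (al A : Cplx) (c : nat -> Cplx).
Hypothesis Hrec : qrec al A c.

Lemma qrec_abs_summable x : Cnorm al * Cnorm x < 1 -> abs_summable (fun j => c j * x ^ j).
Proof.
  intros Hx. pose proof (Cnorm_ge0 al); pose proof (Cnorm_ge0 A); pose proof (Cnorm_ge0 x).
  destruct (ratio_margin (Cnorm al * Cnorm x) (Cnorm A * Cnorm x)) as (rho & delta & Hr & Hd & Hm);
    [nra | nra |].
  destruct (qpow_eventually_le delta Hd) as [J HJ].
  apply (abs_summable_ratio _ rho J Hr). intros j Hj.
  pose proof (qpow_bounds j); pose proof (qpow_S_lt1 j).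
  assert (HqS : q ^ S j <= q ^ j) by (apply qpow_le_mono; lia).
  assert (Hc : (Cnorm (c (S j)) * (1 - q ^ S j) <= Cnorm (c j) * (Cnorm al + Cnorm A * q ^ j))%R).
  { pose proof (f_equal Cnorm (Hrec j)) as E.
    rewrite !Cnorm_mul, <- RtoC_1, <- RtoC_sub, Cnorm_RtoC, Rabs_pos_eq in E by lra.
    rewrite E. apply Rmult_le_compat_l; [apply Cnorm_ge0 |].
    eapply Rle_trans; [apply Cnorm_sub |].
    rewrite Cnorm_mul, Cnorm_RtoC, Rabs_pos_eq by lra. lra. }
  assert (Hratio : (Cnorm (c (S j)) * Cnorm x <= rho * Cnorm (c j))%R).
  { apply (Rmult_le_reg_r (1 - q ^ S j)); [lra |].
    specialize (Hm (q ^ S j)%R (q ^ j)%R ltac:(pose proof (qpow_bounds (S j)); lra) (HJ j Hj)).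
    pose proof (Cnorm_ge0 (c j)); pose proof (Cnorm_ge0 (c (S j))).
    apply Rle_trans with (Cnorm (c j) * (rho * (1 - q ^ S j)))%R; [| right; ring].
    apply Rle_trans with (Cnorm (c j) * (Cnorm al * Cnorm x + Cnorm A * Cnorm x * q ^ j))%R.
    - apply Rle_trans with (Cnorm (c j) * (Cnorm al + Cnorm A * q ^ j) * Cnorm x)%R; [nra | right; ring].
    - apply Rmult_le_compat_l; lra. }
  rewrite !Cnorm_mul, !Cnorm_pow. simpl pow.
  pose proof (pow_le (Cnorm x) j (Cnorm_ge0 x)).
  apply Rle_trans with (Cnorm (c (S j)) * Cnorm x * Cnorm x ^ j)%R; [right; ring |].
  apply Rle_trans with (rho * Cnorm (c j) * Cnorm x ^ j)%R; [| right; ring].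
  apply Rmult_le_compat_r; auto.
Qed.

Lemma qrec_partial_sums y N :
  Csum_to N (fun j => c j * y ^ j) - al * y * Csum_to N (fun j => c j * y ^ j)
  - Csum_to N (fun j => c j * (y * RtoC q) ^ j) + A * y * Csum_to N (fun j => c j * (y * RtoC q) ^ j)
  = - (c N * (Cone - RtoC (q ^ N)) * y ^ N).
Proof.
  induction N; [simpl; apply Cplx_ext; simpl; ring |].
  rewrite !Csum_S, Cpow_mul_distr, Cpow_RtoC.
  transitivity (- (c N * (Cone - RtoC (q ^ N)) * y ^ N)
    + (c N * y ^ N - al * y * (c N * y ^ N) - c N * (y ^ N * RtoC (q ^ N))
       + A * y * (c N * (y ^ N * RtoC (q ^ N))))); [rewrite <- IHN; ring |].
  rewrite Cpow_S, Hrec. ring.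
Qed.

Lemma qrec_functional x y :
  abs_summable (fun j => c j * x ^ j) -> Cnorm y <= Cnorm x ->
  (Cone - al * y) * pseries c y = (Cone - A * y) * pseries c (y * RtoC q).
Proof.
  intros Hs Hy.
  assert (Hyq : Cnorm (y * RtoC q) <= Cnorm x).
  { eapply Rle_trans; [| apply Hy].
    pose proof (Cnorm_mul_qpow_le y 1) as H. rewrite pow_1 in H. exact H. }
  pose proof (pseries_cv c x y Hy Hs) as H1. pose proof (pseries_cv c x _ Hyq Hs) as H2.
  assert (E : pseries c y - al * y * pseries c y - pseries c (y * RtoC q)
              + A * y * pseries c (y * RtoC q) = Czero).
  { apply (Ccv_unique (fun N => - (c N * (Cone - RtoC (q ^ N)) * y ^ N))).
    - eapply Ccv_ext; [intros N; apply qrec_partial_sums |].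
      apply Ccv_add; [apply Ccv_sub; [apply Ccv_sub |] |]; auto using Ccv_scal.
    - (* the boundary term is the difference of two terms of convergent series *)
      apply (Ccv_ext (fun N => c N * (y * RtoC q) ^ N - c N * y ^ N)).
      { intros N. rewrite Cpow_mul_distr, Cpow_RtoC. ring. }
      replace Czero with (Czero - Czero) by ring.
      apply Ccv_sub; apply abs_summable_lim0; eapply abs_summable_pow_le; eauto. }
  transitivity ((pseries c y - al * y * pseries c y - pseries c (y * RtoC q)
                 + A * y * pseries c (y * RtoC q)) + (Cone - A * y) * pseries c (y * RtoC q));
    [ring | rewrite E; ring].
Qed.

Lemma qrec_iterate x M : abs_summable (fun j => c j * x ^ j) ->
  qpoch (al * x) q M * pseries c x = qpoch (A * x) q M * pseries c (x * RtoC (q ^ M)).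
Proof.
  intros Hs. induction M.
  - simpl. replace (x * RtoC 1) with x by (apply Cplx_ext; simpl; ring). reflexivity.
  - rewrite !qpoch_S.
    transitivity ((Cone - al * (x * RtoC (q ^ M))) * (qpoch (al * x) q M * pseries c x)); [ring |].
    rewrite IHM.
    transitivity (qpoch (A * x) q M * ((Cone - al * (x * RtoC (q ^ M))) * pseries c (x * RtoC (q ^ M))));
      [ring |].
    rewrite (qrec_functional x _ Hs (Cnorm_mul_qpow_le x M)), RtoC_qpow_S.
    replace (x * RtoC (q ^ M) * RtoC q) with (x * (RtoC q * RtoC (q ^ M))) by ring. ring.
Qed.

Lemma qrec_pseries_qpow_lim x : c 0%nat = Cone -> abs_summable (fun j => c j * x ^ j) ->
  Ccv (fun M => pseries c (x * RtoC (q ^ M))) Cone.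
Proof.
  intros H0 [B HB] eps Heps.
  assert (HB0 : 0 <= B) by (specialize (HB 0%nat); simpl in HB; lra).
  destruct (qpow_eventually_le (eps / (B + 1))%R ltac:(apply Rdiv_lt_0_compat; lra)) as [J HJ].
  exists J. intros M HM. rewrite <- H0. pose proof (qpow_bounds M).
  eapply Rle_lt_trans.
  - apply (pseries_sub_const_le c x _ B (q ^ M) HB); [lra |].
    rewrite Cnorm_mul, Cnorm_RtoC, Rabs_pos_eq by lra. lra.
  - specialize (HJ M HM).
    apply Rle_lt_trans with (eps / (B + 1) * B)%R; [apply Rmult_le_compat_r; lra |].
    apply (Rmult_lt_reg_r (B + 1)); [lra |].
    replace (eps / (B + 1) * B * (B + 1))%R with (eps * B)%R by (field; lra). nra.
Qed.

End QSeries.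

Lemma binom2_S j : binom2 (S j) = (binom2 j + j)%nat.
Proof.
  unfold binom2. replace (S j * (S j - 1))%nat with (j * (j - 1) + j * 2)%nat.
  - rewrite Nat.div_add by lia. reflexivity.
  - destruct j; [reflexivity |]. replace (S (S j) - 1)%nat with (S j) by lia.
    replace (S j - 1)%nat with j by lia. nia.
Qed.

Lemma qpoch_zero_l q M : qpoch Czero q M = Cone.
Proof. induction M; [reflexivity |]. rewrite qpoch_S, IHM. ring. Qed.

Lemma qpoch_add a q M n : qpoch a q (M + n) = qpoch a q M * qpoch (a * RtoC (q ^ M)) q n.
Proof.
  induction n; [rewrite Nat.add_0_r; cbn [qpoch Cprod_to]; ring |].
  rewrite Nat.add_succ_r, !qpoch_S, IHn, pow_add, RtoC_mul. ring.
Qed.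

(** * Euler's expansion and the q-binomial theorem *)

Section QBinomial.

Variable q : R.
Hypothesis Hq : 0 < q < 1.

Definition qbin_coef (A : Cplx) (j : nat) : Cplx := qpoch A q j / qpoch (RtoC q) q j.

Definition euler_coef (j : nat) : Cplx :=
  (- Cone) ^ j * RtoC (q ^ binom2 j) / qpoch (RtoC q) q j.

Lemma euler_coef_at0 : euler_coef 0 = Cone.
Proof.
  unfold euler_coef. cbn [qpoch Cprod_to Cpow]. change (binom2 0) with 0%nat.
  rewrite pow_O, RtoC_1. field. apply Cone_neq0.
Qed.

Lemma qbin_coef_at0 A : qbin_coef A 0 = Cone.
Proof. unfold qbin_coef. cbn [qpoch Cprod_to]. field. apply Cone_neq0. Qed.

Lemma qbin_coef_0 j : qbin_coef Czero j = Cone / qpoch (RtoC q) q j.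
Proof. unfold qbin_coef. rewrite qpoch_zero_l. reflexivity. Qed.

Lemma qbin_coef_qrec A : qrec q Cone A (qbin_coef A).
Proof.
  intros j. unfold qbin_coef. rewrite !qpoch_S, <- RtoC_qpow_S.
  pose proof (qpoch_q_neq0 q Hq j). pose proof (one_sub_RtoC_neq0 _ (qpow_S_lt1 q Hq j)).
  field. auto.
Qed.

Lemma euler_coef_qrec : qrec q Czero Cone euler_coef.
Proof.
  intros j. unfold euler_coef. rewrite !qpoch_S, <- RtoC_qpow_S.
  rewrite binom2_S, pow_add, RtoC_mul, Cpow_S.
  pose proof (qpoch_q_neq0 q Hq j). pose proof (one_sub_RtoC_neq0 _ (qpow_S_lt1 q Hq j)).
  field. auto.
Qed.

Lemma euler_abs_summable x : abs_summable (fun j => euler_coef j * x ^ j).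
Proof. apply (qrec_abs_summable q Hq _ _ _ euler_coef_qrec). rewrite Cnorm_zero. lra. Qed.

Lemma qbin_abs_summable A x : Cnorm x < 1 -> abs_summable (fun j => qbin_coef A j * x ^ j).
Proof. intros Hx. apply (qrec_abs_summable q Hq _ _ _ (qbin_coef_qrec A)). rewrite Cnorm_one. lra. Qed.

(* Euler's functional equation gives [F(x) = (x;q)_M F(x q^M)], and [F(x q^M) -> 1]. *)
Lemma qpoch_cv_pseries x : Ccv (fun N => qpoch x q N) (pseries euler_coef x).
Proof.
  set (F := pseries euler_coef).
  assert (Lim : Ccv (fun M => F (x * RtoC (q ^ M))) Cone).
  { apply qrec_pseries_qpow_lim; auto using euler_coef_at0, euler_abs_summable. }
  destruct (Lim (1 / 2)%R ltac:(lra)) as [N0 HN0].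
  apply (Ccv_ext_eventually (fun M => F x * Cinv (F (x * RtoC (q ^ M)))) _ _ N0).
  - intros M HM. assert (Nz : F (x * RtoC (q ^ M)) <> Czero).
    { intro E. specialize (HN0 M HM). rewrite E in HN0.
      replace (Czero - Cone) with (- Cone) in HN0 by ring.
      rewrite Cnorm_opp, Cnorm_one in HN0. lra. }
    pose proof (qrec_iterate q Hq _ _ _ euler_coef_qrec x M (euler_abs_summable x)) as It.
    replace (Czero * x) with Czero in It by ring. replace (Cone * x) with x in It by ring.
    rewrite qpoch_zero_l in It.
    fold F in It. replace (F x) with (Cone * F x) by ring. rewrite It. field. auto.
  - pose proof (Ccv_scal (F x) _ _ (Ccv_inv _ _ Lim Cone_neq0)) as H.
    replace (F x * Cinv Cone) with (F x) in H by (field; apply Cone_neq0). exact H.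
Qed.

Lemma qpoch_inf_euler x : qpoch_inf x q = pseries euler_coef x.
Proof. apply Clim_correct, qpoch_cv_pseries. Qed.

Lemma qpoch_cv x : Ccv (fun N => qpoch x q N) (qpoch_inf x q).
Proof. rewrite qpoch_inf_euler. apply qpoch_cv_pseries. Qed.

Theorem euler_expansion x : Cseries_cv (fun j => euler_coef j * x ^ j) (qpoch_inf x q).
Proof. rewrite qpoch_inf_euler. apply (pseries_cv _ x x (Rle_refl _)), euler_abs_summable. Qed.

Lemma qpoch_inf_zero : qpoch_inf Czero q = Cone.
Proof.
  apply Clim_correct. eapply Ccv_ext; [| apply Ccv_const].
  intros; symmetry; apply qpoch_zero_l.
Qed.

Lemma qpoch_inf_split a M : qpoch_inf a q = qpoch a q M * qpoch_inf (a * RtoC (q ^ M)) q.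
Proof.
  apply (Ccv_unique (fun n => qpoch a q (M + n))); [apply Ccv_shift, qpoch_cv |].
  eapply Ccv_ext; [| apply Ccv_scal, qpoch_cv].
  intros n; symmetry; apply qpoch_add.
Qed.

(* Iterating the functional equation [M] times and letting [M -> oo]. *)
Lemma qpoch_inf_mul_pseries_qbin A x : Cnorm x < 1 ->
  qpoch_inf x q * pseries (qbin_coef A) x = qpoch_inf (A * x) q.
Proof.
  intros Hx. pose proof (qbin_abs_summable A x Hx) as Hs.
  apply (Ccv_unique (fun M => qpoch x q M * pseries (qbin_coef A) x)).
  - apply Ccv_mul; [apply qpoch_cv | apply Ccv_const].
  - replace (qpoch_inf (A * x) q) with (qpoch_inf (A * x) q * Cone) by ring.
    eapply Ccv_ext;
      [| apply Ccv_mul;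
         [apply qpoch_cv | apply (qrec_pseries_qpow_lim q Hq (qbin_coef A) x); auto using qbin_coef_at0]].
    intros M; simpl. rewrite <- (qrec_iterate q Hq _ _ _ (qbin_coef_qrec A) x M Hs).
    replace (Cone * x) with x by ring. reflexivity.
Qed.

Lemma qpoch_inf_neq0 x : Cnorm x < 1 -> qpoch_inf x q <> Czero.
Proof.
  intros Hx E. pose proof (qpoch_inf_mul_pseries_qbin Czero x Hx) as H.
  rewrite E in H. replace (Czero * x) with Czero in H by ring. rewrite qpoch_inf_zero in H.
  apply Cone_neq0. rewrite <- H. ring.
Qed.

Theorem q_binomial A x : Cnorm x < 1 ->
  Cseries_cv (fun j => qbin_coef A j * x ^ j) (qpoch_inf (A * x) q / qpoch_inf x q).
Proof.
  intros Hx. pose proof (qpoch_inf_neq0 x Hx).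
  rewrite <- (qpoch_inf_mul_pseries_qbin A x Hx).
  replace (qpoch_inf x q * pseries (qbin_coef A) x / qpoch_inf x q)
    with (pseries (qbin_coef A) x) by (field; auto).
  apply (pseries_cv _ x x (Rle_refl _)), qbin_abs_summable, Hx.
Qed.

Lemma Cnorm_mul_qpow_S_lt1 (b : Cplx) N :
  Cnorm (b * RtoC q) < 1 -> Cnorm (b * RtoC (q ^ S N)) < 1.
Proof.
  intros Hb. eapply Rle_lt_trans; [| apply Hb].
  replace (b * RtoC (q ^ S N)) with (b * RtoC q * RtoC (q ^ N)) by (rewrite RtoC_qpow_S; ring).
  apply Cnorm_mul_qpow_le; auto.
Qed.

Lemma qpoch_inf_split_S (b : Cplx) N :
  qpoch_inf (b * RtoC q) q = qpoch (b * RtoC q) q N * qpoch_inf (b * RtoC (q ^ S N)) q.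
Proof.
  rewrite (qpoch_inf_split _ N).
  replace (b * RtoC q * RtoC (q ^ N)) with (b * RtoC (q ^ S N)) by (rewrite RtoC_qpow_S; ring).
  reflexivity.
Qed.

Lemma qpoch_div_qpoch_inf (b : Cplx) N : Cnorm (b * RtoC q) < 1 ->
  qpoch (b * RtoC q) q N / qpoch_inf (b * RtoC q) q = Cone / qpoch_inf (b * RtoC (q ^ S N)) q.
Proof.
  intros Hb. pose proof (qpoch_inf_neq0 _ Hb) as Nz.
  pose proof (qpoch_inf_neq0 _ (Cnorm_mul_qpow_S_lt1 b N Hb)).
  rewrite (qpoch_inf_split_S b N) in *. pose proof (Cmul_neq0_l _ _ Nz).
  field. auto.
Qed.

End QBinomial.

(** * Expanding the polynomials termwise *)

Lemma qH_as_qterm_sum m n z1 z2 q :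
  qH m n z1 z2 q = Csum_to (S (Nat.min m n)) (fun k => qterm m n k z1 z2 q * Cone).
Proof. apply Csum_ext. intros; ring. Qed.

Lemma qP_zero m n z1 z2 q : qP m n z1 z2 Czero q = qH m n z1 z2 q.
Proof.
  apply Csum_ext. intros k _. replace (Czero * RtoC q) with Czero by ring.
  rewrite qpoch_zero_l. ring.
Qed.

Lemma qterm_scale m n k z1 z2 q t :
  qterm m n k (z1 * RtoC t) (z2 * RtoC t) q = qterm m n k z1 z2 q * RtoC (t ^ ((m - k) + (n - k))).
Proof. unfold qterm. rewrite !Cpow_mul_distr, !Cpow_RtoC, pow_add, RtoC_mul. ring. Qed.

(* The exponent bookkeeping behind replacing [z_i] by [z_i q^{j/2}] in the [k]-th term. *)
Lemma sqrt_q_exponent q m n k j : 0 < q -> (k <= m)%nat -> (k <= n)%nat ->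
  ((sqrt q ^ (m + n) * q) ^ j * (sqrt q ^ j) ^ ((m - k) + (n - k)) = (q ^ S (m + n - k)) ^ j)%R.
Proof.
  intros Hq Hm Hn. pose proof (sqrt_sqrt q ltac:(lra)) as Hs.
  replace m with (k + (m - k))%nat at 1 3 by lia. replace n with (k + (n - k))%nat at 1 3 by lia.
  set (a := (m - k)%nat). set (c := (n - k)%nat).
  replace (k + a + (k + c) - k)%nat with (k + a + c)%nat by lia.
  replace ((sqrt q ^ j) ^ (a + c))%R with ((sqrt q ^ (a + c)) ^ j)%R
    by (rewrite <- !pow_mult; f_equal; lia).
  rewrite <- Rpow_mult_distr. f_equal.
  replace (sqrt q ^ (k + a + (k + c)) * q * sqrt q ^ (a + c))%R
    with ((sqrt q * sqrt q) ^ (k + a + c) * q)%R by (rewrite Rpow_mult_distr, !pow_add; ring).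
  rewrite Hs. simpl. ring.
Qed.

Lemma qterm_sum_scale m n (z1 z2 b : Cplx) q j (w : nat -> Cplx) : 0 < q ->
  (b * RtoC (sqrt q ^ (m + n) * q)) ^ j *
    Csum_to (S (Nat.min m n))
      (fun k => qterm m n k (z1 * RtoC (sqrt q ^ j)) (z2 * RtoC (sqrt q ^ j)) q * w k)
  = Csum_to (S (Nat.min m n)) (fun k => qterm m n k z1 z2 q * w k * (b * RtoC (q ^ S (m + n - k))) ^ j).
Proof.
  intros Hq. rewrite <- Csum_scal_l. apply Csum_ext. intros k Hk.
  rewrite qterm_scale, !Cpow_mul_distr, !Cpow_RtoC.
  rewrite <- (sqrt_q_exponent q m n k j Hq) by lia. rewrite RtoC_mul. ring.
Qed.

Lemma qterm_sum_series m n z1 z2 q (b : Cplx) (w d E : nat -> Cplx) :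
  (forall M, Cseries_cv (fun j => d j * (b * RtoC (q ^ S M)) ^ j) (E M)) ->
  Cseries_cv
    (fun j => Csum_to (S (Nat.min m n))
       (fun k => qterm m n k z1 z2 q * w k * (d j * (b * RtoC (q ^ S (m + n - k))) ^ j)))
    (Csum_to (S (Nat.min m n)) (fun k => qterm m n k z1 z2 q * w k * E (m + n - k)%nat)).
Proof.
  intros H. apply Cseries_cv_Csum. intros k _.
  eapply Cseries_cv_ext; [| apply Cseries_cv_scal, H]. intros j; simpl. ring.
Qed.

Lemma qpoch_ratio_shift q (a b : Cplx) M : 0 < q < 1 ->
  Cnorm (b * RtoC q) < 1 -> Cnorm (a * b * RtoC q) < 1 ->
  qpoch (a * b * RtoC q) q M / qpoch_inf (a * b * RtoC q) q
  * (qpoch_inf (a * (b * RtoC (q ^ S M))) q / qpoch_inf (b * RtoC (q ^ S M)) q)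
  = qpoch (b * RtoC q) q M / qpoch_inf (b * RtoC q) q.
Proof.
  intros Hq Hb Hab.
  rewrite (qpoch_div_qpoch_inf q Hq _ _ Hab), (qpoch_div_qpoch_inf q Hq _ _ Hb).
  replace (a * (b * RtoC (q ^ S M))) with (a * b * RtoC (q ^ S M)) by ring.
  pose proof (qpoch_inf_neq0 q Hq _ (Cnorm_mul_qpow_S_lt1 q Hq _ M Hab)).
  pose proof (qpoch_inf_neq0 q Hq _ (Cnorm_mul_qpow_S_lt1 q Hq _ M Hb)).
  field. auto.
Qed.

Theorem ultraspherical_transfer q (a b z1 z2 : Cplx) m n : 0 < q < 1 ->
  Cnorm (b * RtoC q) < 1 -> Cnorm (a * b * RtoC q) < 1 ->
  Cseries_cv
    (fun j => qbin_coef q a j * (b * RtoC (sqrt q ^ (m + n) * q)) ^ j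
       * (qP m n (z1 * RtoC (sqrt q ^ j)) (z2 * RtoC (sqrt q ^ j)) (a * b) q
          / qpoch_inf (a * b * RtoC q) q))
    (qP m n z1 z2 b q / qpoch_inf (b * RtoC q) q).
Proof.
  intros Hq Hb Hab.
  set (w := fun k => qpoch (a * b * RtoC q) q (m + n - k) / qpoch_inf (a * b * RtoC q) q).
  apply Cseries_cv_ext with (a := fun j => Csum_to (S (Nat.min m n))
    (fun k => qterm m n k z1 z2 q * w k * (qbin_coef q a j * (b * RtoC (q ^ S (m + n - k))) ^ j))).
  - intros j. symmetry.
    replace (qP _ _ _ _ _ _ / _)
      with (Csum_to (S (Nat.min m n)) (fun k => qterm m n k (z1 * RtoC (sqrt q ^ j))
                                                  (z2 * RtoC (sqrt q ^ j)) q * w k))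
      by (unfold qP, w, Cdiv; rewrite <- Csum_scal_r; apply Csum_ext; intros; ring).
    rewrite (Cmul_assoc (qbin_coef q a j)), qterm_sum_scale by lra. rewrite <- Csum_scal_l.
    apply Csum_ext; intros; ring.
  - replace (qP m n z1 z2 b q / qpoch_inf (b * RtoC q) q)
      with (Csum_to (S (Nat.min m n)) (fun k => qterm m n k z1 z2 q * w k
              * (qpoch_inf (a * (b * RtoC (q ^ S (m + n - k)))) q
                 / qpoch_inf (b * RtoC (q ^ S (m + n - k))) q))).
    + apply (qterm_sum_series m n z1 z2 q b w (qbin_coef q a)
               (fun M => qpoch_inf (a * (b * RtoC (q ^ S M))) q / qpoch_inf (b * RtoC (q ^ S M)) q)).
      intros M. apply (q_binomial q Hq), (Cnorm_mul_qpow_S_lt1 q Hq _ _ Hb).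
    + transitivity (Csum_to (S (Nat.min m n)) (fun k => qterm m n k z1 z2 q
                      * (qpoch (b * RtoC q) q (m + n - k) / qpoch_inf (b * RtoC q) q))).
      * apply Csum_ext; intros k _. unfold w.
        rewrite (Cmul_assoc (qterm m n k z1 z2 q)), qpoch_ratio_shift; auto.
      * unfold qP, Cdiv. rewrite <- Csum_scal_r. apply Csum_ext; intros; ring.
Qed.

Theorem ultraspherical_hermite_inversion q (b z1 z2 : Cplx) m n : 0 < q < 1 ->
  Cseries_cv
    (fun k => euler_coef q k * (b * RtoC (sqrt q ^ (m + n) * q)) ^ k
       * qP m n (z1 * RtoC (sqrt q ^ k)) (z2 * RtoC (sqrt q ^ k)) b q)
    (qH m n z1 z2 q * qpoch_inf (b * RtoC q) q).
Proof.
  intros Hq. set (w := fun i => qpoch (b * RtoC q) q (m + n - i)).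
  apply Cseries_cv_ext with (a := fun k => Csum_to (S (Nat.min m n))
    (fun i => qterm m n i z1 z2 q * w i * (euler_coef q k * (b * RtoC (q ^ S (m + n - i))) ^ k))).
  - intros k. symmetry.
    rewrite (Cmul_assoc (euler_coef q k)). unfold qP.
    rewrite qterm_sum_scale by lra. rewrite <- Csum_scal_l. apply Csum_ext; intros; unfold w; ring.
  - rewrite qH_as_qterm_sum, <- Csum_scal_r.
    replace (Csum_to _ (fun k => qterm m n k z1 z2 q * Cone * qpoch_inf (b * RtoC q) q))
      with (Csum_to (S (Nat.min m n))
              (fun k => qterm m n k z1 z2 q * w k * qpoch_inf (b * RtoC (q ^ S (m + n - k))) q)).
    + apply (qterm_sum_series m n z1 z2 q b w (euler_coef q)
               (fun M => qpoch_inf (b * RtoC (q ^ S M)) q)).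
      intros M. apply (euler_expansion q Hq).
    + apply Csum_ext; intros k _. unfold w. rewrite (qpoch_inf_split_S q Hq b (m + n - k)). ring.
Qed.

(** * The generating function *)

Lemma qterm_factor q (z1 z2 u v T : Cplx) m n k : 0 < q < 1 -> (k <= m)%nat -> (k <= n)%nat ->
  qterm m n k z1 z2 q / (qpoch (RtoC q) q m * qpoch (RtoC q) q n) * u ^ m * v ^ n * T ^ (m + n - k)
  = euler_coef q k * (u * v * T) ^ k
    * ((qbin_coef q Czero (m - k) * (u * z1 * T) ^ (m - k))
       * (qbin_coef q Czero (n - k) * (v * z2 * T) ^ (n - k))).
Proof.
  intros Hq Hm Hn. rewrite !qbin_coef_0. unfold qterm, qbinom, euler_coef.
  set (a := (m - k)%nat). set (c := (n - k)%nat).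
  replace (m + n - k)%nat with (k + a + c)%nat by lia.
  replace m with (k + a)%nat by lia. replace n with (k + c)%nat by lia.
  rewrite !Cpow_mul_distr, !Cpow_add.
  pose proof (qpoch_q_neq0 q Hq k). pose proof (qpoch_q_neq0 q Hq a).
  pose proof (qpoch_q_neq0 q Hq c). pose proof (qpoch_q_neq0 q Hq (k + a)).
  pose proof (qpoch_q_neq0 q Hq (k + c)).
  field. repeat split; auto.
Qed.

Lemma Csum_min_extend N m n (G : nat -> Cplx) : (m < N)%nat -> (n < N)%nat ->
  Csum_to (S (Nat.min m n)) G
  = Csum_to N (fun k => if andb (k <=? m)%nat (k <=? n)%nat then G k else Czero).
Proof.
  intros Hm Hn. rewrite (Csum_extend (S (Nat.min m n)) N); [| | lia].
  - apply Csum_ext. intros k Hk.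
    replace (andb (k <=? m)%nat (k <=? n)%nat) with true; [reflexivity |].
    symmetry. apply andb_true_intro; split; apply Nat.leb_le; lia.
  - intros k Hk. destruct (Nat.leb_spec k m), (Nat.leb_spec k n); simpl; auto; lia.
Qed.

Lemma Csum_square_convolution N (al be ga : nat -> Cplx) :
  Csum_to N (fun m => Csum_to N (fun n =>
    Csum_to (S (Nat.min m n)) (fun k => al k * (be (m - k)%nat * ga (n - k)%nat))))
  = Csum_to N (fun k => al k * (Csum_to (N - k) be * Csum_to (N - k) ga)).
Proof.
  transitivity (Csum_to N (fun m => Csum_to N (fun n => Csum_to N (fun k =>
      if andb (k <=? m)%nat (k <=? n)%nat then al k * (be (m - k)%nat * ga (n - k)%nat) else Czero)))).
  { apply Csum_ext; intros m Hm. apply Csum_ext; intros n Hn. apply Csum_min_extend; auto. }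
  transitivity (Csum_to N (fun m => Csum_to N (fun k => Csum_to N (fun n =>
      if andb (k <=? m)%nat (k <=? n)%nat then al k * (be (m - k)%nat * ga (n - k)%nat) else Czero)))).
  { apply Csum_ext; intros m Hm. apply Csum_exchange. }
  rewrite Csum_exchange. apply Csum_ext; intros k Hk.
  rewrite <- !Csum_from, Csum_mul, <- Csum_scal_l.
  apply Csum_ext; intros m Hm. rewrite <- Csum_scal_l.
  apply Csum_ext; intros n Hn.
  destruct (k <=? m)%nat, (k <=? n)%nat; simpl; ring.
Qed.

Section GeneratingFunction.

Variable q : R.
Hypothesis Hq : 0 < q < 1.
Variables u v z1 z2 : Cplx.
Hypotheses (Hx : Cnorm (u * z1) < 1) (Hy : Cnorm (v * z2) < 1).

Definition inv_qpoch_partial (z : Cplx) (n : nat) : Cplx :=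
  Csum_to n (fun a => qbin_coef q Czero a * z ^ a).

(* Square partial sums of [(uvT;q)_oo * 1/(uz1T;q)_oo * 1/(vz2T;q)_oo], each factor expanded. *)
Definition gf_partial (T : Cplx) (N : nat) : Cplx :=
  Csum_to N (fun k => euler_coef q k * (u * v * T) ^ k
    * (inv_qpoch_partial (u * z1 * T) (N - k) * inv_qpoch_partial (v * z2 * T) (N - k))).

Definition gf_kernel (T : Cplx) : Cplx :=
  qpoch_inf (u * v * T) q / (qpoch_inf (u * z1 * T) q * qpoch_inf (v * z2 * T) q).

Definition gf_coef (m n j : nat) : Cplx :=
  Csum_to (S (Nat.min m n)) (fun k => qterm m n k z1 z2 q / (qpoch (RtoC q) q m * qpoch (RtoC q) q n)
    * u ^ m * v ^ n * RtoC (q ^ j) ^ (m + n - k)).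

Lemma inv_qpoch_partial_cv z : Cnorm z < 1 -> Ccv (inv_qpoch_partial z) (Cone / qpoch_inf z q).
Proof.
  intros Hz. pose proof (q_binomial q Hq Czero z Hz) as H.
  replace (Czero * z) with Czero in H by ring. rewrite qpoch_inf_zero in H by auto. exact H.
Qed.

Lemma inv_qpoch_partial_bound x B z n :
  (forall N, Rsum_to N (fun a => Cnorm (qbin_coef q Czero a * x ^ a)) <= B) ->
  Cnorm z <= Cnorm x -> Cnorm (inv_qpoch_partial z n) <= B.
Proof.
  intros HB Hz. eapply Rle_trans; [apply Csum_norm_le |]. eapply Rle_trans; [| apply (HB n)].
  apply Rsum_le. intros a _. rewrite !Cnorm_mul.
  apply Rmult_le_compat_l; auto using Cnorm_ge0, Cnorm_pow_le.
Qed.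

Lemma gf_partial_bound : exists K, forall T N, Cnorm T <= 1 -> Cnorm (gf_partial T N) <= K.
Proof.
  destruct (euler_abs_summable q Hq (u * v)) as [Bw HBw].
  destruct (qbin_abs_summable q Hq Czero _ Hx) as [Bx HBx].
  destruct (qbin_abs_summable q Hq Czero _ Hy) as [By HBy].
  assert (Bx0 : 0 <= Bx) by (specialize (HBx 0%nat); simpl in HBx; lra).
  assert (By0 : 0 <= By) by (specialize (HBy 0%nat); simpl in HBy; lra).
  exists (Bw * (Bx * By))%R. intros T N HT.
  eapply Rle_trans; [apply Csum_norm_le |].
  apply Rle_trans with (Rsum_to N (fun k => Cnorm (euler_coef q k * (u * v) ^ k)%C * (Bx * By)))%R.
  - apply Rsum_le. intros k _. rewrite !Cnorm_mul.
    apply Rmult_le_compat; try (apply Rmult_le_pos; apply Cnorm_ge0).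
    + apply Rmult_le_compat_l; auto using Cnorm_ge0, Cnorm_pow_le, Cnorm_scale_le.
    + apply Rmult_le_compat; auto using Cnorm_ge0;
        eapply inv_qpoch_partial_bound; eauto using Cnorm_scale_le.
  - rewrite (Rsum_ext _ _ (fun k => (Bx * By) * Cnorm (euler_coef q k * (u * v) ^ k)%C)%R)
      by (intros; ring).
    rewrite Rsum_scal. specialize (HBw N). assert (0 <= Bx * By) by nra. nra.
Qed.

(* Tannery's theorem over the Euler series of [(uvT;q)_oo]. *)
Lemma gf_partial_cv T : Cnorm T <= 1 -> Ccv (gf_partial T) (gf_kernel T).
Proof.
  intros HT. destruct gf_partial_bound as [K HK].
  assert (Hx' : Cnorm (u * z1 * T) < 1) by (eapply Rle_lt_trans; [apply Cnorm_scale_le |]; eauto).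
  assert (Hy' : Cnorm (v * z2 * T) < 1) by (eapply Rle_lt_trans; [apply Cnorm_scale_le |]; eauto).
  set (P := fun N k => inv_qpoch_partial (u * z1 * T) (N - k) * inv_qpoch_partial (v * z2 * T) (N - k)).
  set (e := Cone / qpoch_inf (u * z1 * T) q * (Cone / qpoch_inf (v * z2 * T) q)).
  destruct (qbin_abs_summable q Hq Czero _ Hx) as [Bx HBx].
  destruct (qbin_abs_summable q Hq Czero _ Hy) as [By HBy].
  apply (tannery (fun k => euler_coef q k * (u * v * T) ^ k)
           (fun N k => if (k <? N)%nat then P N k else Czero) (fun _ => e) _ _ (Bx * By)).
  - apply euler_abs_summable; auto.
  - intros N k. destruct (k <? N)%nat.
    + unfold P. rewrite Cnorm_mul. apply Rmult_le_compat; auto using Cnorm_ge0;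
        eapply inv_qpoch_partial_bound; eauto using Cnorm_scale_le.
    + rewrite Cnorm_zero. specialize (HBx 0%nat); specialize (HBy 0%nat). simpl in *. nra.
  - intros k. apply (Ccv_ext_eventually (fun N => P N k) _ _ (S k)).
    { intros N HN. destruct (Nat.ltb_spec k N); [reflexivity | lia]. }
    apply Ccv_mul; apply Ccv_sub_index, inv_qpoch_partial_cv; auto.
  - intros N. unfold gf_partial.
    rewrite (Csum_ext N _ (fun k => euler_coef q k * (u * v * T) ^ k
                                   * (if (k <? N)%nat then P N k else Czero))).
    + apply Cseries_cv_finite. intros j Hj. destruct (Nat.ltb_spec j N); [lia | ring].
    + intros k Hk. destruct (Nat.ltb_spec k N); [reflexivity | lia].
  - replace (gf_kernel T) with (e * qpoch_inf (u * v * T) q).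
    + eapply Cseries_cv_ext; [| apply Cseries_cv_scal, euler_expansion; auto].
      intros k; simpl; ring.
    + unfold gf_kernel, e. pose proof (qpoch_inf_neq0 q Hq _ Hx').
      pose proof (qpoch_inf_neq0 q Hq _ Hy'). field. auto.
Qed.


Lemma gf_coef_double_sum N j :
  Csum_to N (fun m => Csum_to N (fun n => gf_coef m n j)) = gf_partial (RtoC (q ^ j)) N.
Proof.
  unfold gf_partial, inv_qpoch_partial.
  rewrite <- (Csum_square_convolution N (fun k => euler_coef q k * (u * v * RtoC (q ^ j)) ^ k)
               (fun a => qbin_coef q Czero a * (u * z1 * RtoC (q ^ j)) ^ a)
               (fun c => qbin_coef q Czero c * (v * z2 * RtoC (q ^ j)) ^ c)).
  apply Csum_ext; intros m _. apply Csum_ext; intros n _. apply Csum_ext; intros k Hk.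
  rewrite qterm_factor; auto; lia.
Qed.

Lemma gf_coef_series (b : Cplx) m n : Cnorm (b * RtoC q) < 1 ->
  Cseries_cv (fun j => (b * RtoC q) ^ j / qpoch (RtoC q) q j * gf_coef m n j)
    (qP m n z1 z2 b q / (qpoch (RtoC q) q m * qpoch (RtoC q) q n) * u ^ m * v ^ n
     / qpoch_inf (b * RtoC q) q).
Proof.
  intros Hb. set (w := fun _ : nat => u ^ m * v ^ n / (qpoch (RtoC q) q m * qpoch (RtoC q) q n)).
  apply Cseries_cv_ext with (a := fun j => Csum_to (S (Nat.min m n))
    (fun k => qterm m n k z1 z2 q * w k * (qbin_coef q Czero j * (b * RtoC (q ^ S (m + n - k))) ^ j))).
  - intros j. cbv beta. unfold gf_coef. rewrite <- Csum_scal_l. apply Csum_ext; intros k _.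
    rewrite qbin_coef_0, !Cpow_mul_distr, !Cpow_RtoC.
    replace ((q ^ S (m + n - k)) ^ j)%R with (q ^ j * (q ^ j) ^ (m + n - k))%R
      by (rewrite <- !pow_mult, <- pow_add; f_equal; lia).
    rewrite RtoC_mul. unfold w. field.
    repeat split; apply qpoch_q_neq0; auto.
  - replace (qP m n z1 z2 b q / _ * u ^ m * v ^ n / qpoch_inf (b * RtoC q) q)
      with (Csum_to (S (Nat.min m n)) (fun k => qterm m n k z1 z2 q * w k
              * (qpoch_inf (Czero * (b * RtoC (q ^ S (m + n - k)))) q
                 / qpoch_inf (b * RtoC (q ^ S (m + n - k))) q))).
    + apply (qterm_sum_series m n z1 z2 q b w (qbin_coef q Czero)
               (fun M => qpoch_inf (Czero * (b * RtoC (q ^ S M))) q / qpoch_inf (b * RtoC (q ^ S M)) q)).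
      intros M. apply (q_binomial q Hq), (Cnorm_mul_qpow_S_lt1 q Hq _ _ Hb).
    + unfold qP, Cdiv. rewrite <- !Csum_scal_r. apply Csum_ext; intros k _.
      replace (Czero * (b * RtoC (q ^ S (m + n - k)))) with Czero by ring.
      rewrite qpoch_inf_zero by auto.
      pose proof (qpoch_div_qpoch_inf q Hq b (m + n - k) Hb) as E. unfold Cdiv in E.
      rewrite <- E. unfold w, Cdiv. ring.
Qed.

Theorem generating_function_series (b : Cplx) : Cnorm (b * RtoC q) < 1 ->
  exists S,
    Cseries_cv (fun j => (b * RtoC q) ^ j / qpoch (RtoC q) q j * gf_kernel (RtoC (q ^ j))) S /\
    Cdouble_series_cv
      (fun m n => qP m n z1 z2 b q / (qpoch (RtoC q) q m * qpoch (RtoC q) q n) * u ^ m * v ^ n)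
      (qpoch_inf (b * RtoC q) q * S).
Proof.
  intros Hb. set (c := fun j => (b * RtoC q) ^ j / qpoch (RtoC q) q j).
  assert (Hc : abs_summable c).
  { apply (abs_summable_le _ (fun j => qbin_coef q Czero j * (b * RtoC q) ^ j) 1%R);
      [lra | | apply qbin_abs_summable; auto].
    intros j. rewrite qbin_coef_0, Rmult_1_l. right. unfold c. f_equal.
    field. apply qpoch_q_neq0; auto. }
  assert (HT : forall j, Cnorm (RtoC (q ^ j)) <= 1).
  { intros j. rewrite Cnorm_RtoC. pose proof (qpow_bounds q Hq j). rewrite Rabs_pos_eq; lra. }
  destruct gf_partial_bound as [K HK].
  assert (HKer : forall j, Cnorm (gf_kernel (RtoC (q ^ j))) <= K).
  { intros j. apply (Ccv_norm_le _ _ _ 0%nat (gf_partial_cv _ (HT j))). auto. }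
  destruct (abs_summable_cv (fun j => c j * gf_kernel (RtoC (q ^ j)))) as [S HS].
  { apply (abs_summable_le _ c K); auto.
    - eapply Rle_trans; [apply Cnorm_ge0 | apply (HKer 0%nat)].
    - intros j. rewrite Cnorm_mul, Rmult_comm. apply Rmult_le_compat_r; auto using Cnorm_ge0. }
  exists S. split; [exact HS |].
  pose proof (qpoch_inf_neq0 q Hq _ Hb) as Hbinf.
  set (V := fun N => Csum_to N (fun m => Csum_to N (fun n =>
              qP m n z1 z2 b q / (qpoch (RtoC q) q m * qpoch (RtoC q) q n) * u ^ m * v ^ n
              / qpoch_inf (b * RtoC q) q))).
  assert (HV : Ccv V S).
  { apply (tannery c (fun N j => gf_partial (RtoC (q ^ j)) N) (fun j => gf_kernel (RtoC (q ^ j))) V S K);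
      auto using gf_partial_cv.
    intros N. apply Cseries_cv_ext with
      (a := fun j => Csum_to N (fun m => Csum_to N (fun n => c j * gf_coef m n j))).
    - intros j. rewrite <- gf_coef_double_sum, <- Csum_scal_l. apply Csum_ext; intros m _.
      apply Csum_scal_l.
    - apply Cseries_cv_Csum. intros m _. apply Cseries_cv_Csum. intros n _.
      apply gf_coef_series; auto. }
  eapply Ccv_ext; [| apply (Ccv_scal (qpoch_inf (b * RtoC q) q)), HV].
  intros N. unfold V. rewrite <- Csum_scal_l. apply Csum_ext; intros m _. rewrite <- Csum_scal_l.
  apply Csum_ext; intros n _. field. repeat split; auto using qpoch_q_neq0.
Qed.

End GeneratingFunction.

Lemma gf_kernel_qpow q (u v z1 z2 : Cplx) j : 0 < q < 1 ->
  Cnorm (u * z1) < 1 -> Cnorm (v * z2) < 1 -> Cnorm (u * v) < 1 ->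
  gf_kernel q u v z1 z2 (RtoC (q ^ j))
  = qpoch_inf (u * v) q / (qpoch_inf (u * z1) q * qpoch_inf (v * z2) q)
    * (qpoch (u * z1) q j * qpoch (v * z2) q j / qpoch (u * v) q j).
Proof.
  intros Hq Hx Hy Hw. unfold gf_kernel.
  pose proof (qpoch_inf_neq0 q Hq _ Hx) as Nx. pose proof (qpoch_inf_neq0 q Hq _ Hy) as Ny.
  pose proof (qpoch_inf_neq0 q Hq _ Hw) as Nw.
  rewrite (qpoch_inf_split q Hq (u * z1) j) in Nx |- *.
  rewrite (qpoch_inf_split q Hq (v * z2) j) in Ny |- *.
  rewrite (qpoch_inf_split q Hq (u * v) j) in Nw |- *.
  pose proof (Cmul_neq0_l _ _ Nx); pose proof (Cmul_neq0_r _ _ Nx).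
  pose proof (Cmul_neq0_l _ _ Ny); pose proof (Cmul_neq0_r _ _ Ny).
  pose proof (Cmul_neq0_l _ _ Nw).
  field. repeat split; auto.
Qed.

Corollary ultraspherical_change_of_parameter q (b c z1 z2 : Cplx) m n : 0 < q < 1 ->
  Cnorm (b * RtoC q) < 1 -> Cnorm (c * RtoC q) < 1 -> b <> Czero ->
  Cseries_cv
    (fun j => qpoch (c / b) q j / qpoch (RtoC q) q j * (b * RtoC (sqrt q ^ (m + n) * q)) ^ j
       * (qP m n (z1 * RtoC (sqrt q ^ j)) (z2 * RtoC (sqrt q ^ j)) c q / qpoch_inf (c * RtoC q) q))
    (qP m n z1 z2 b q / qpoch_inf (b * RtoC q) q).
Proof.
  intros Hq Hb Hc Hb0. assert (Hcb : c / b * b = c) by (field; auto).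
  pose proof (ultraspherical_transfer q (c / b) b z1 z2 m n Hq Hb) as H.
  rewrite Hcb in H. exact (H Hc).
Qed.

Corollary ultraspherical_hermite_expansion q (b z1 z2 : Cplx) m n : 0 < q < 1 ->
  Cnorm (b * RtoC q) < 1 ->
  Cseries_cv
    (fun j => (b * RtoC (sqrt q ^ (m + n) * q)) ^ j / qpoch (RtoC q) q j
       * qH m n (z1 * RtoC (sqrt q ^ j)) (z2 * RtoC (sqrt q ^ j)) q)
    (qP m n z1 z2 b q / qpoch_inf (b * RtoC q) q).
Proof.
  intros Hq Hb.
  assert (H0 : Cnorm (Czero * b * RtoC q) < 1).
  { replace (Czero * b * RtoC q) with Czero by ring. rewrite Cnorm_zero. lra. }
  eapply Cseries_cv_ext; [| apply (ultraspherical_transfer q Czero b z1 z2 m n Hq Hb H0)].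
  intros j. cbv beta. replace (Czero * b) with Czero by ring. replace (Czero * RtoC q) with Czero by ring.
  rewrite qP_zero, qpoch_inf_zero, qbin_coef_0 by auto.
  pose proof (qpoch_q_neq0 q Hq j). field. split; auto using Cone_neq0.
Qed.

Corollary hermite_ultraspherical_expansion q (b z1 z2 : Cplx) m n : 0 < q < 1 ->
  Cnorm (b * RtoC q) < 1 ->
  exists S : Cplx,
    Cseries_cv
      (fun k => (- (b * RtoC (sqrt q ^ (m + n) * q))) ^ k / qpoch (RtoC q) q k
         * RtoC (q ^ binom2 k) * qP m n (z1 * RtoC (sqrt q ^ k)) (z2 * RtoC (sqrt q ^ k)) b q)
      S /\
    qH m n z1 z2 q = Cone / qpoch_inf (b * RtoC q) q * S.
Proof.
  intros Hq Hb. pose proof (qpoch_inf_neq0 q Hq _ Hb).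
  exists (qH m n z1 z2 q * qpoch_inf (b * RtoC q) q). split; [| field; auto].
  eapply Cseries_cv_ext; [| apply (ultraspherical_hermite_inversion q b z1 z2 m n Hq)].
  intros k. cbv beta. unfold euler_coef.
  replace (- (b * RtoC (sqrt q ^ (m + n) * q))) with (- Cone * (b * RtoC (sqrt q ^ (m + n) * q)))
    by ring.
  rewrite (Cpow_mul_distr (- Cone)). pose proof (qpoch_q_neq0 q Hq k). field. auto.
Qed.

Corollary ultraspherical_generating_function q (b z1 z2 u v : Cplx) : 0 < q < 1 ->
  Cnorm (b * RtoC q) < 1 -> Cnorm (u * z1) < 1 -> Cnorm (v * z2) < 1 -> Cnorm (u * v) < 1 ->
  exists S2 S3 : Cplx,
    Cdouble_series_cv
      (fun m n => qP m n z1 z2 b q / (qpoch (RtoC q) q m * qpoch (RtoC q) q n) * u ^ m * v ^ n)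
      (qpoch_inf (b * RtoC q) q * S2) /\
    Cseries_cv
      (fun j => (b * RtoC q) ^ j / qpoch (RtoC q) q j
         * (qpoch_inf (u * v * RtoC (q ^ j)) q
            / (qpoch_inf (u * z1 * RtoC (q ^ j)) q * qpoch_inf (v * z2 * RtoC (q ^ j)) q)))
      S2 /\
    Cseries_cv
      (fun j => (qpoch (u * z1) q j * qpoch (v * z2) q j) / (qpoch (RtoC q) q j * qpoch (u * v) q j)
         * (b * RtoC q) ^ j)
      S3 /\
    qpoch_inf (b * RtoC q) q * S2
    = (qpoch_inf (b * RtoC q) q * qpoch_inf (u * v) q)
      / (qpoch_inf (u * z1) q * qpoch_inf (v * z2) q) * S3.
Proof.
  intros Hq Hb Hx Hy Hw.
  destruct (generating_function_series q Hq u v z1 z2 Hx Hy b Hb) as [S [HS HF]].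
  set (kappa := qpoch_inf (u * v) q / (qpoch_inf (u * z1) q * qpoch_inf (v * z2) q)).
  pose proof (qpoch_inf_neq0 q Hq _ Hx). pose proof (qpoch_inf_neq0 q Hq _ Hy).
  pose proof (qpoch_inf_neq0 q Hq _ Hw) as Nw.
  assert (Hk : kappa <> Czero).
  { intro E. apply Nw.
    replace (qpoch_inf (u * v) q) with (kappa * (qpoch_inf (u * z1) q * qpoch_inf (v * z2) q))
      by (unfold kappa; field; auto).
    rewrite E; ring. }
  exists S, (Cinv kappa * S). split; [exact HF |]. split; [exact HS |]. split.
  - eapply Cseries_cv_ext; [| apply Cseries_cv_scal, HS].
    intros j. cbv beta. rewrite gf_kernel_qpow by auto. fold kappa.
    pose proof (qpoch_q_neq0 q Hq j).
    assert (qpoch (u * v) q j <> Czero).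
    { intro E. apply Nw. rewrite (qpoch_inf_split q Hq _ j), E. ring. }
    field. auto.
  - unfold kappa. field. auto.
Qed.

Theorem theorem5p2 (q : R) (b z1 z2 : Cplx) :
  0 < q < 1 ->
  Cnorm (b * RtoC q) < 1 ->
  (* (i) *)
  (forall u v : Cplx,
     Cnorm (u * z1) < 1 -> Cnorm (v * z2) < 1 -> Cnorm (u * v) < 1 ->
     exists S2 S3 : Cplx,
       Cdouble_series_cv
         (fun m n => qP m n z1 z2 b q / (qpoch (RtoC q) q m * qpoch (RtoC q) q n)
                     * u ^ m * v ^ n)
         (qpoch_inf (b * RtoC q) q * S2) /\
       Cseries_cv
         (fun j => (b * RtoC q) ^ j / qpoch (RtoC q) q j
                   * (qpoch_inf (u * v * RtoC (q ^ j)) q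
                      / (qpoch_inf (u * z1 * RtoC (q ^ j)) q
                         * qpoch_inf (v * z2 * RtoC (q ^ j)) q)))
         S2 /\
       Cseries_cv
         (fun j => (qpoch (u * z1) q j * qpoch (v * z2) q j)
                   / (qpoch (RtoC q) q j * qpoch (u * v) q j)
                   * (b * RtoC q) ^ j)
         S3 /\
       qpoch_inf (b * RtoC q) q * S2 =
       (qpoch_inf (b * RtoC q) q * qpoch_inf (u * v) q)
       / (qpoch_inf (u * z1) q * qpoch_inf (v * z2) q) * S3)
  /\
  (* (ii) *)
  (forall (c : Cplx) (m n : nat),
     Cnorm (c * RtoC q) < 1 -> b <> Czero ->
     Cseries_cv
       (fun j => qpoch (c / b) q j / qpoch (RtoC q) q j
                 * (b * RtoC (sqrt q ^ (m + n) * q)) ^ j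
                 * (qP m n (z1 * RtoC (sqrt q ^ j)) (z2 * RtoC (sqrt q ^ j)) c q
                    / qpoch_inf (c * RtoC q) q))
       (qP m n z1 z2 b q / qpoch_inf (b * RtoC q) q))
  /\
  (* (iii) *)
  (forall m n : nat,
     Cseries_cv
       (fun j => (b * RtoC (sqrt q ^ (m + n) * q)) ^ j / qpoch (RtoC q) q j
                 * qH m n (z1 * RtoC (sqrt q ^ j)) (z2 * RtoC (sqrt q ^ j)) q)
       (qP m n z1 z2 b q / qpoch_inf (b * RtoC q) q)
     /\
     exists S : Cplx,
       Cseries_cv
         (fun k => (- (b * RtoC (sqrt q ^ (m + n) * q))) ^ k / qpoch (RtoC q) q k
                   * RtoC (q ^ binom2 k)
                   * qP m n (z1 * RtoC (sqrt q ^ k)) (z2 * RtoC (sqrt q ^ k)) b q)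
         S /\
       qH m n z1 z2 q = Cone / qpoch_inf (b * RtoC q) q * S).
Proof.
  intros Hq Hb. split; [| split].
  - intros u v Hx Hy Hw. apply ultraspherical_generating_function; auto.
  - intros c m n Hc Hb0. apply ultraspherical_change_of_parameter; auto.
  - intros m n. split.
    + apply ultraspherical_hermite_expansion; auto.
    + apply hermite_ultraspherical_expansion; auto.
Qed.
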